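(* Let $f(z)=\sum_{k=0}^\infty a_kz^{n_k}$ be analytic in $\mathbb D$, where $\{n_k\}$ are positive integers with $n_{k+1}\ge\lambda n_k$ for all $k$ and some $\lambda>1$. If $\sum_{k=0}^\infty|a_k|^2(\log n_k)^3<\infty$, then $f\in BMOA_{\log}\cap H^\infty$.
   Context: $\mathbb D$ is the open unit disc, $dA=\frac1\pi dx\,dy$, $H^\infty$ is the space of bounded analytic functions on $\mathbb D$. For an arc $I\subset\partial\mathbb D$ of length $|I|$, $S(I)=\{re^{it}: e^{it}\in I,\ 1-\frac{|I|}{2\pi}\le r<1\}$. $BMOA_{\log}$ is the space of $g\in H^1$ for which there is $C>0$ with $\int_{S(I)}(1-|z|^2)|g'(z)|^2\,dA(z)\le C|I|\left(\log\frac{2}{|I|}\right)^{-2}$ for every arc $I$. *)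

From Stdlib Require Import Reals.
Open Scope R_scope.

Definition Cx : Type := (R * R)%type.
Definition C0 : Cx := (0, 0).
Definition Cadd (z w : Cx) : Cx := (fst z + fst w, snd z + snd w).
Definition Copp (z : Cx) : Cx := (- fst z, - snd z).
Definition Csub (z w : Cx) : Cx := Cadd z (Copp w).
Definition Cmul (z w : Cx) : Cx :=
  (fst z * fst w - snd z * snd w, fst z * snd w + snd z * fst w).
Fixpoint Cpow (z : Cx) (n : nat) : Cx :=
  match n with O => (1, 0) | S m => Cmul z (Cpow z m) end.
Definition Cnorm (z : Cx) : R := sqrt (fst z ^ 2 + snd z ^ 2).
Definition polar (r t : R) : Cx := (r * cos t, r * sin t).

Definition inD (z : Cx) : Prop := Cnorm z < 1.

Definition has_cderiv (g : Cx -> Cx) (z w : Cx) : Prop :=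
  forall eps, 0 < eps -> exists delta, 0 < delta /\
    forall h, Cnorm h < delta ->
      Cnorm (Csub (Csub (g (Cadd z h)) (g z)) (Cmul w h)) <= eps * Cnorm h.

Definition int1 (g : R -> R) (a b V : R) : Prop :=
  Un_cv (fun n => ((b - a) / INR (S n)) *
     sum_f_R0 (fun i => g (a + (INR i + / 2) * (b - a) / INR (S n))) n) V.

Definition int2 (g : R -> R -> R) (a b c d V : R) : Prop :=
  Un_cv (fun n => ((b - a) / INR (S n)) * ((d - c) / INR (S n)) *
     sum_f_R0 (fun i => sum_f_R0 (fun j =>
        g (a + (INR i + / 2) * (b - a) / INR (S n))
          (c + (INR j + / 2) * (d - c) / INR (S n))) n) n) V.

Definition bounded_on_D (g : Cx -> Cx) : Prop :=
  exists M, forall z, inD z -> Cnorm (g z) <= M.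

Definition H1 (g : Cx -> Cx) : Prop :=
  (forall z, inD z -> exists w, has_cderiv g z w) /\
  exists M, forall r, 0 <= r < 1 ->
    exists V, int1 (fun t => Cnorm (g (polar r t))) 0 (2 * PI) V /\
              V / (2 * PI) <= M.

Definition Hinf (g : Cx -> Cx) : Prop :=
  (forall z, inD z -> exists w, has_cderiv g z w) /\ bounded_on_D g.

(* The arc I = { e^{it} : t0 <= t <= t0 + l }, 0 < l <= 2 pi, |I| = l.
   S(I) = { r e^{it} : t in [t0, t0+l], 1 - l/(2 pi) <= r < 1 }.
   With dA = (1/pi) dx dy = (1/pi) r dr dt, the integral
     int_{S(I)} (1-|z|^2) |g'(z)|^2 dA(z)
   is the (monotone) limit as rho -> 1- of the integrals over the polar
   rectangles [t0, t0+l] x [1 - l/(2pi), rho]; so "integral <= B" means each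
   of these truncated integrals is <= B.  The bound C |I| (log(2/|I|))^{-2}
   is written multiplied out, V * (log(2/|I|))^2 <= C |I|, so that it is
   +infinity (no constraint) exactly when log(2/|I|) = 0. *)
Definition carleson_box_bound (g' : Cx -> Cx) (K : R) (t0 l : R) : Prop :=
  forall rho, 1 - l / (2 * PI) <= rho < 1 ->
    exists V,
      int2 (fun t r => / PI * ((1 - r ^ 2) * (Cnorm (g' (polar r t))) ^ 2 * r))
           t0 (t0 + l) (1 - l / (2 * PI)) rho V /\
      V * (ln (2 / l)) ^ 2 <= K * l.

Definition BMOA_log (g : Cx -> Cx) : Prop :=
  H1 g /\
  exists g' : Cx -> Cx, (forall z, inD z -> has_cderiv g z (g' z)) /\
  exists K, 0 < K /\
    forall t0 l, 0 < l <= 2 * PI -> carleson_box_bound g' K t0 l.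

Fixpoint lac_psum (a : nat -> Cx) (n : nat -> nat) (z : Cx) (N : nat) : Cx :=
  match N with
  | O => Cmul (a O) (Cpow z (n O))
  | S M => Cadd (lac_psum a n z M) (Cmul (a (S M)) (Cpow z (n (S M))))
  end.

From Coquelicot Require Import Coquelicot.
From Stdlib Require Import Reals Lra Lia Psatz ZArith FunctionalExtensionality.
Open Scope R_scope.

(* (1) Gap growth gives log n_k >= k log lambda, so AM-GM against the weight
       (log n_k)^3 yields sum_k |a_k| < oo: f is bounded, Lipschitz on smaller
       discs, and the termwise derivative f' = sum_k a_k n_k z^(n_k - 1) is its
       complex derivative (Taylor remainder estimate for each z^(n_k)).
   (2) The lacunary estimate sum_k n_k s^(n_k) <= C_lambda / (1 - s) and
       Cauchy-Schwarz give |f'(z)|^2 (1 - |z|) <= C sum_k |a_k|^2 n_k ((1+|z|)/2)^(n_k).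
   (3) On a Carleson box of side l = 2 pi h the radial integral of n ((1+r)/2)^n is
       at most min(n h, 2), and min(n h, 2) log^2(1/h) <= C (1 + log^3 n); summing
       against |a_k|^2 gives the bound C |I| log^(-2)(2/|I|). *)

(** * Midpoint sums and Riemann integrals of Lipschitz functions *)

(* For
   Lipschitz integrands the midpoint sums converge to the Coquelicot integral
   [RInt] at rate O(1/n), which lets us compute and estimate with [RInt]. *)

Definition lipschitz (G : R -> R) (K : R) : Prop :=
  forall u v, Rabs (G u - G v) <= K * Rabs (u - v).

Definition lipschitz_on_rect (g : R -> R -> R) (a b c d K : R) : Prop :=
  forall t t' r r', a <= t <= b -> a <= t' <= b -> c <= r <= d -> c <= r' <= d ->
    Rabs (g t r - g t' r') <= K * (Rabs (t - t') + Rabs (r - r')).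

Lemma lipschitz_continuous (G : R -> R) (K x : R) :
  lipschitz G K -> continuous G x.
Proof.
  intros HL. apply continuity_pt_filterlim. intros eps Heps.
  pose proof (Rabs_pos K) as HK.
  exists (eps / (Rabs K + 1)). split.
  { apply Rdiv_lt_0_compat; lra. }
  intros y [_ Hy]. simpl in Hy. unfold R_dist in *.
  assert (Hd : Rabs (y - x) < eps / (Rabs K + 1)) by exact Hy.
  assert (Hd' : (Rabs K + 1) * Rabs (y - x) < eps).
  { apply (Rmult_lt_compat_l (Rabs K + 1)) in Hd; [| lra].
    replace ((Rabs K + 1) * (eps / (Rabs K + 1))) with eps in Hd by (field; lra). exact Hd. }
  pose proof (HL y x). pose proof (Rabs_pos (y - x)).
  assert (K * Rabs (y - x) <= Rabs K * Rabs (y - x))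
    by (apply Rmult_le_compat_r; [lra | apply RRle_abs]).
  change (Rabs (G y - G x) < eps). nra.
Qed.

Lemma lipschitz_ex_RInt (G : R -> R) (K a b : R) : lipschitz G K -> ex_RInt G a b.
Proof.
  intros HL. apply (ex_RInt_continuous (V := R_CompleteNormedModule)).
  intros z _. exact (lipschitz_continuous G K z HL).
Qed.

Lemma midpoint_cell_error (G : R -> R) (K x y : R) :
  x <= y -> 0 <= K -> lipschitz G K ->
  Rabs (RInt G x y - (y - x) * G ((x + y) / 2)) <= (y - x) * (K * (y - x)).
Proof.
  intros Hxy HK HL.
  assert (HI : is_RInt (fun t => G t - G ((x + y) / 2)) x y
                  (RInt G x y - (y - x) * G ((x + y) / 2))).
  { apply (is_RInt_minus (V := R_NormedModule)).
    - apply (RInt_correct (V := R_CompleteNormedModule)). exact (lipschitz_ex_RInt G K x y HL).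
    - apply (is_RInt_const (V := R_NormedModule)). }
  rewrite <- (is_RInt_unique _ _ _ _ HI).
  apply abs_RInt_le_const; [exact Hxy | eexists; exact HI |].
  intros t Ht. eapply Rle_trans; [apply HL |].
  apply Rmult_le_compat_l; [exact HK |]. apply Rabs_le. lra.
Qed.

Definition midpoint_sum (G : R -> R) (a b : R) (n : nat) : R :=
  ((b - a) / INR (S n)) *
     sum_f_R0 (fun i => G (a + (INR i + / 2) * (b - a) / INR (S n))) n.

Lemma midpoint_partial_error (G : R -> R) (K a D : R) (j : nat) :
  0 <= D -> 0 <= K -> lipschitz G K ->
  Rabs (D * sum_f_R0 (fun i => G (a + INR i * D + D / 2)) j - RInt G a (a + INR (S j) * D))
    <= INR (S j) * D * (K * D).
Proof.
  intros HD HK HL. induction j as [|j IH].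
  - pose proof (midpoint_cell_error G K a (a + D) ltac:(lra) HK HL) as H.
    replace (a + D - a) with D in H by ring.
    replace ((a + (a + D)) / 2) with (a + 0 * D + D / 2) in H by field.
    simpl sum_f_R0. replace (a + INR 1 * D) with (a + D) by (simpl; ring).
    rewrite Rabs_minus_sym. simpl INR. lra.
  - set (x := a + INR (S j) * D).
    assert (Hx : a + INR (S (S j)) * D = x + D) by (unfold x; rewrite (S_INR (S j)); ring).
    rewrite tech5, Hx.
    rewrite <- (RInt_Chasles (V := R_CompleteNormedModule) G a x (x + D))
      by (apply (lipschitz_ex_RInt G K); exact HL).
    pose proof (midpoint_cell_error G K x (x + D) ltac:(lra) HK HL) as Hc.
    replace (x + D - x) with D in Hc by ring.
    replace ((x + (x + D)) / 2) with (a + INR (S j) * D + D / 2) in Hc by (unfold x; field).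
    set (s := sum_f_R0 (fun i => G (a + INR i * D + D / 2)) j) in *.
    set (g := G (a + INR (S j) * D + D / 2)) in *.
    replace (D * (s + g) - plus (RInt G a x) (RInt G x (x + D)))
      with ((D * s - RInt G a x) - (RInt G x (x + D) - D * g)) by (unfold plus; simpl; ring).
    eapply Rle_trans; [apply Rabs_triang |]. rewrite Rabs_Ropp.
    fold x in IH. rewrite (S_INR (S j)). lra.
Qed.

Lemma midpoint_sum_error (G : R -> R) (K a b : R) (n : nat) :
  a <= b -> 0 <= K -> lipschitz G K ->
  Rabs (midpoint_sum G a b n - RInt G a b) <= K * (b - a) ^ 2 / INR (S n).
Proof.
  intros Hab HK HL.
  assert (HSn : 0 < INR (S n)) by (apply lt_0_INR; lia).
  set (D := (b - a) / INR (S n)).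
  assert (HD : 0 <= D) by (unfold D; apply Rdiv_le_0_compat; lra).
  pose proof (midpoint_partial_error G K a D n HD HK HL) as P.
  replace (a + INR (S n) * D) with b in P by (unfold D; field; lra).
  unfold midpoint_sum. fold D.
  replace (sum_f_R0 (fun i => G (a + (INR i + / 2) * (b - a) / INR (S n))) n)
    with (sum_f_R0 (fun i => G (a + INR i * D + D / 2)) n)
    by (apply sum_eq; intros i _; f_equal; unfold D; field; lra).
  eapply Rle_trans; [exact P |]. right. unfold D. field. lra.
Qed.

Lemma Un_cv_rate (u : nat -> R) (V M : R) :
  0 <= M -> (forall m, Rabs (u m - V) <= M / INR (S m)) -> Un_cv u V.
Proof.
  intros HM Hu eps Heps.
  destruct (archimed (M / eps)) as [Har _].
  assert (HMe : 0 <= M / eps) by (apply Rdiv_le_0_compat; lra).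
  assert (Hpos : (0 <= up (M / eps))%Z) by (apply le_IZR; lra).
  exists (Z.to_nat (up (M / eps))). intros m Hm.
  unfold R_dist. eapply Rle_lt_trans; [apply Hu |].
  assert (HmI : IZR (up (M / eps)) <= INR m).
  { rewrite <- (Z2Nat.id (up (M / eps))) by lia. rewrite <- INR_IZR_INZ. apply le_INR. lia. }
  rewrite S_INR. pose proof (pos_INR m).
  apply (Rmult_lt_reg_r (INR m + 1)); [lra |].
  replace (M / (INR m + 1) * (INR m + 1)) with M by (field; lra).
  assert (M / eps * eps = M) by (field; lra). nra.
Qed.

Lemma int1_RInt (G : R -> R) (K a b : R) :
  a <= b -> 0 <= K -> lipschitz G K -> int1 G a b (RInt G a b).
Proof.
  intros Hab HK HL. apply (Un_cv_rate _ _ (K * (b - a) ^ 2)).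
  - apply Rmult_le_pos; [lra | apply pow2_ge_0].
  - intros m. exact (midpoint_sum_error G K a b m Hab HK HL).
Qed.

(* Projection onto [a,b]; used to extend a function Lipschitz on a rectangle
   to a globally Lipschitz one without changing it on the rectangle. *)
Definition clamp (a b x : R) : R := Rmax a (Rmin b x).

Lemma clamp_in (a b x : R) : a <= b -> a <= clamp a b x <= b.
Proof. intros. unfold clamp, Rmax, Rmin. repeat destruct Rle_dec; lra. Qed.

Lemma clamp_id (a b x : R) : a <= x <= b -> clamp a b x = x.
Proof. intros. unfold clamp, Rmax, Rmin. repeat destruct Rle_dec; lra. Qed.

Lemma clamp_lipschitz (a b x y : R) :
  a <= b -> Rabs (clamp a b x - clamp a b y) <= Rabs (x - y).
Proof.
  intros. unfold clamp, Rmax, Rmin, Rabs.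
  repeat destruct Rle_dec; repeat destruct Rcase_abs; lra.
Qed.

Definition clamped (g : R -> R -> R) (a b c d : R) (t r : R) : R :=
  g (clamp a b t) (clamp c d r).

Lemma clamped_lipschitz (g : R -> R -> R) (a b c d K : R) :
  a <= b -> c <= d -> 0 <= K -> lipschitz_on_rect g a b c d K ->
  forall t t' r r', Rabs (clamped g a b c d t r - clamped g a b c d t' r')
                    <= K * (Rabs (t - t') + Rabs (r - r')).
Proof.
  intros Hab Hcd HK HL t t' r r'. unfold clamped.
  eapply Rle_trans; [apply HL; apply clamp_in; assumption |].
  apply Rmult_le_compat_l; [exact HK |].
  pose proof (clamp_lipschitz a b t t' Hab). pose proof (clamp_lipschitz c d r r' Hcd). lra.
Qed.

Definition inner_integral (g : R -> R -> R) (a b c d : R) (t : R) : R :=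
  RInt (clamped g a b c d t) c d.

Lemma RInt_param_lipschitz (G : R -> R -> R) (K c d : R) :
  c <= d -> 0 <= K ->
  (forall t t' r r', Rabs (G t r - G t' r') <= K * (Rabs (t - t') + Rabs (r - r'))) ->
  lipschitz (fun t => RInt (G t) c d) (K * (d - c)).
Proof.
  intros Hcd HK HL t t'.
  assert (Hlip : forall s, lipschitz (G s) K).
  { intros s u v. eapply Rle_trans; [apply HL |].
    rewrite Rminus_diag, Rabs_R0, Rplus_0_l. lra. }
  assert (HI : is_RInt (fun r => G t r - G t' r) c d (RInt (G t) c d - RInt (G t') c d)).
  { apply (is_RInt_minus (V := R_NormedModule));
    apply (RInt_correct (V := R_CompleteNormedModule)); eapply lipschitz_ex_RInt; apply Hlip. }
  rewrite <- (is_RInt_unique _ _ _ _ HI).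
  eapply Rle_trans; [apply abs_RInt_le_const; [exact Hcd | eexists; exact HI |] |].
  - intros r _. eapply Rle_trans; [apply HL |].
    rewrite Rminus_diag, Rabs_R0, Rplus_0_r. apply Rle_refl.
  - right. ring.
Qed.

Lemma inner_integral_lipschitz (g : R -> R -> R) (a b c d K : R) :
  a <= b -> c <= d -> 0 <= K -> lipschitz_on_rect g a b c d K ->
  lipschitz (inner_integral g a b c d) (K * (d - c)).
Proof.
  intros Hab Hcd HK HL. apply RInt_param_lipschitz; [exact Hcd | exact HK |].
  exact (clamped_lipschitz g a b c d K Hab Hcd HK HL).
Qed.

Lemma midpoint_node_in (a b : R) (m i : nat) :
  a <= b -> (i <= m)%nat -> a <= a + (INR i + / 2) * (b - a) / INR (S m) <= b.
Proof.
  intros Hab Hi. apply le_INR in Hi. pose proof (pos_INR i).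
  assert (HSm : 0 < INR (S m)) by (apply lt_0_INR; lia).
  assert (Hnode : 0 <= (INR i + / 2) * (b - a) / INR (S m) <= b - a).
  { split.
    - apply Rdiv_le_0_compat; [apply Rmult_le_pos |]; lra.
    - apply (Rmult_le_reg_r (INR (S m))); [exact HSm |].
      replace ((INR i + / 2) * (b - a) / INR (S m) * INR (S m))
        with ((INR i + / 2) * (b - a)) by (field; lra).
      rewrite S_INR. nra. }
  lra.
Qed.

(* The double midpoint sum is the outer midpoint rule applied to the inner
   midpoint sums (the clamping is invisible at the nodes, which lie in the rectangle). *)
Lemma double_midpoint_rows (g : R -> R -> R) (a b c d : R) (m : nat) :
  a <= b -> c <= d ->
  (b - a) / INR (S m) * ((d - c) / INR (S m)) * sum_f_R0 (fun i => sum_f_R0 (fun j =>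
      g (a + (INR i + / 2) * (b - a) / INR (S m)) (c + (INR j + / 2) * (d - c) / INR (S m))) m) m
  = (b - a) / INR (S m) * sum_f_R0 (fun i =>
      midpoint_sum (clamped g a b c d (a + (INR i + / 2) * (b - a) / INR (S m))) c d m) m.
Proof.
  intros Hab Hcd. rewrite Rmult_assoc. f_equal. rewrite scal_sum. apply sum_eq. intros i Hi.
  unfold midpoint_sum. rewrite Rmult_comm. f_equal. apply sum_eq. intros j Hj.
  unfold clamped. rewrite (clamp_id a b) by (apply midpoint_node_in; auto).
  rewrite (clamp_id c d) by (apply midpoint_node_in; auto). reflexivity.
Qed.

(* For a Lipschitz integrand on a rectangle, the double midpoint sums converge
   to the iterated integral: the inner sums approximate the inner integrals
   uniformly, and the outer sum of the (Lipschitz) inner integral converges. *)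
Lemma int2_RInt (g : R -> R -> R) (a b c d K : R) :
  a <= b -> c <= d -> 0 <= K -> lipschitz_on_rect g a b c d K ->
  int2 g a b c d (RInt (inner_integral g a b c d) a b).
Proof.
  intros Hab Hcd HK HL.
  set (G := clamped g a b c d). set (F := inner_integral g a b c d).
  assert (HGr : forall s, lipschitz (G s) K).
  { intros s u v. eapply Rle_trans; [apply (clamped_lipschitz g a b c d K) |]; auto.
    rewrite Rminus_diag, Rabs_R0, Rplus_0_l. lra. }
  pose proof (inner_integral_lipschitz g a b c d K Hab Hcd HK HL) as HF.
  assert (HK2 : 0 <= K * (d - c)) by (apply Rmult_le_pos; lra).
  apply (Un_cv_rate _ _ ((b - a) * (K * (d - c) ^ 2) + K * (d - c) * (b - a) ^ 2)).
  { apply Rplus_le_le_0_compat; repeat apply Rmult_le_pos; try lra; apply pow2_ge_0. }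
  intros m. rewrite double_midpoint_rows by auto. fold G.
  assert (HSn : 0 < INR (S m)) by (apply lt_0_INR; lia).
  set (Dt := (b - a) / INR (S m)).
  assert (HDt : 0 <= Dt) by (unfold Dt; apply Rdiv_le_0_compat; lra).
  set (ti := fun i => a + (INR i + / 2) * (b - a) / INR (S m)).
  change (Rabs (Dt * sum_f_R0 (fun i => midpoint_sum (G (ti i)) c d m) m - RInt F a b)
          <= ((b - a) * (K * (d - c) ^ 2) + K * (d - c) * (b - a) ^ 2) / INR (S m)).
  replace (Dt * sum_f_R0 (fun i => midpoint_sum (G (ti i)) c d m) m - RInt F a b)
    with (Dt * sum_f_R0 (fun i => midpoint_sum (G (ti i)) c d m - F (ti i)) m
          + (midpoint_sum F a b m - RInt F a b))
    by (change (midpoint_sum F a b m) with (Dt * sum_f_R0 (fun i => F (ti i)) m);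
        rewrite minus_sum; ring).
  eapply Rle_trans; [apply Rabs_triang |].
  replace (((b - a) * (K * (d - c) ^ 2) + K * (d - c) * (b - a) ^ 2) / INR (S m))
    with (Dt * (INR (S m) * (K * (d - c) ^ 2 / INR (S m)))
          + K * (d - c) * (b - a) ^ 2 / INR (S m)) by (unfold Dt; field; lra).
  apply Rplus_le_compat.
  - rewrite Rabs_mult, (Rabs_right Dt) by lra. apply Rmult_le_compat_l; [exact HDt |].
    eapply Rle_trans; [apply Rsum_abs |].
    rewrite (Rmult_comm (INR (S m))), <- sum_cte.
    apply sum_growing. intros i.
    exact (midpoint_sum_error (G (ti i)) K c d m Hcd HK (HGr (ti i))).
  - exact (midpoint_sum_error F (K * (d - c)) a b m Hab HK2 HF).
Qed.

Lemma RInt_inner_integral_le (g : R -> R -> R) (a b c d K B : R) :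
  a <= b -> c <= d -> 0 <= K -> lipschitz_on_rect g a b c d K ->
  (forall t, a <= t <= b -> inner_integral g a b c d t <= B) ->
  RInt (inner_integral g a b c d) a b <= (b - a) * B.
Proof.
  intros Hab Hcd HK HL HB.
  pose proof (inner_integral_lipschitz g a b c d K Hab Hcd HK HL) as HF.
  assert (HI : is_RInt (fun _ => B) a b (scal (b - a) B))
    by apply (is_RInt_const (V := R_NormedModule)).
  change ((b - a) * B) with (scal (b - a) B). rewrite <- (is_RInt_unique _ _ _ _ HI).
  apply RInt_le; [exact Hab | exact (lipschitz_ex_RInt _ _ a b HF) | eexists; exact HI |].
  intros t Ht. apply HB. lra.
Qed.

Lemma inner_integral_le (g : R -> R -> R) (h : R -> R) (a b c d K I t : R) :
  a <= b -> c <= d -> 0 <= K -> lipschitz_on_rect g a b c d K -> a <= t <= b ->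
  is_RInt h c d I -> (forall r, c <= r <= d -> g t r <= h r) ->
  inner_integral g a b c d t <= I.
Proof.
  intros Hab Hcd HK HL Ht HI Hh.
  rewrite <- (is_RInt_unique _ _ _ _ HI). unfold inner_integral.
  apply RInt_le; [exact Hcd | | eexists; exact HI |].
  - apply (lipschitz_ex_RInt _ K). intros u v.
    eapply Rle_trans; [apply (clamped_lipschitz g a b c d K); auto |].
    rewrite Rminus_diag, Rabs_R0, Rplus_0_l. lra.
  - intros r Hr. unfold clamped. rewrite (clamp_id a b t Ht), (clamp_id c d r) by lra.
    apply Hh. lra.
Qed.

(** * Complex numbers as pairs of reals *)

Ltac ceq := apply injective_projections; simpl; ring.

(* [Cnorm] is definitionally Coquelicot's [Cmod], whose lemmas we reuse. *)
Lemma cn_pos (z : Cx) : 0 <= Cnorm z.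
Proof. apply Cmod_ge_0. Qed.
Lemma cn_mul (z w : Cx) : Cnorm (Cmul z w) = Cnorm z * Cnorm w.
Proof. apply Cmod_mult. Qed.
Lemma cn_pow (z : Cx) (m : nat) : Cnorm (Cpow z m) = Cnorm z ^ m.
Proof. apply Cmod_pow. Qed.
Lemma cn_add (z w : Cx) : Cnorm (Cadd z w) <= Cnorm z + Cnorm w.
Proof. apply Cmod_triangle. Qed.
Lemma cn_opp (z : Cx) : Cnorm (Copp z) = Cnorm z.
Proof. apply Cmod_opp. Qed.
Lemma cn_real (x : R) : Cnorm (x, 0) = Rabs x.
Proof. apply Cmod_R. Qed.
Lemma cn_zero : Cnorm C0 = 0.
Proof. unfold C0. rewrite cn_real. apply Rabs_R0. Qed.

Lemma cn_sub (z w : Cx) : Cnorm (Csub z w) <= Cnorm z + Cnorm w.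
Proof. unfold Csub. eapply Rle_trans; [apply cn_add |]. rewrite cn_opp. lra. Qed.

Lemma cn_fst (z : Cx) : Rabs (fst z) <= Cnorm z.
Proof. pose proof (Rmax_Cmod z). pose proof (Rmax_l (Rabs (fst z)) (Rabs (snd z))). exact (Rle_trans _ _ _ H0 H). Qed.

Lemma cn_snd (z : Cx) : Rabs (snd z) <= Cnorm z.
Proof. pose proof (Rmax_Cmod z). pose proof (Rmax_r (Rabs (fst z)) (Rabs (snd z))). exact (Rle_trans _ _ _ H0 H). Qed.

Lemma cn_le_abs (z : Cx) : Cnorm z <= Rabs (fst z) + Rabs (snd z).
Proof.
  destruct z as [x y]. unfold Cnorm. cbn [fst snd].
  pose proof (Rabs_pos x); pose proof (Rabs_pos y).
  rewrite <- (sqrt_pow2 (Rabs x + Rabs y)) by lra.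
  apply sqrt_le_1_alt. rewrite <- (pow2_abs x), <- (pow2_abs y). nra.
Qed.

Lemma cn_sub_tri (z u w : Cx) : Cnorm (Csub z w) <= Cnorm (Csub z u) + Cnorm (Csub u w).
Proof.
  replace (Csub z w) with (Cadd (Csub z u) (Csub u w)) by (unfold Csub, Cadd, Copp; ceq).
  apply cn_add.
Qed.

Lemma cn_sub_sym (z w : Cx) : Cnorm (Csub z w) = Cnorm (Csub w z).
Proof.
  replace (Csub z w) with (Copp (Csub w z)) by (unfold Csub, Cadd, Copp; ceq).
  apply cn_opp.
Qed.

Lemma cn_le_sub (X Y : Cx) : Cnorm X <= Cnorm Y + Cnorm (Csub X Y).
Proof.
  replace X with (Cadd Y (Csub X Y)) at 1 by (destruct X, Y; unfold Csub, Cadd, Copp; ceq).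
  apply cn_add.
Qed.

Lemma cn_reverse_tri (X Y : Cx) : Rabs (Cnorm X - Cnorm Y) <= Cnorm (Csub X Y).
Proof.
  pose proof (cn_le_sub X Y). pose proof (cn_le_sub Y X). rewrite (cn_sub_sym Y X) in H0.
  apply Rabs_le. lra.
Qed.

Lemma cn_polar (r t : R) : Cnorm (polar r t) = Rabs r.
Proof.
  unfold Cnorm, polar. cbn [fst snd].
  pose proof (sin2_cos2 t) as H. unfold Rsqr in H.
  replace ((r * cos t) ^ 2 + (r * sin t) ^ 2) with (r ^ 2 * (sin t * sin t + cos t * cos t)) by ring.
  rewrite H, Rmult_1_r, <- (pow2_abs r). apply sqrt_pow2, Rabs_pos.
Qed.

Lemma sin_abs_le (x : R) : Rabs (sin x) <= Rabs x.
Proof.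
  assert (Hp : forall y, 0 <= y -> Rabs (sin y) <= y).
  { intros y Hy. destruct (Rle_lt_dec y 1).
    - destruct (Req_dec y 0) as [->|Hne]; [rewrite sin_0, Rabs_R0; lra |].
      assert (0 <= sin y) by (apply sin_ge_0; pose proof PI2_1; lra).
      pose proof (sin_lt_x y ltac:(lra)). rewrite Rabs_right; lra.
    - pose proof (SIN_bound y). apply Rabs_le. lra. }
  destruct (Rle_lt_dec 0 x).
  - rewrite (Rabs_right x) by lra. auto.
  - rewrite <- (Ropp_involutive x), sin_neg, Rabs_Ropp, Rabs_Ropp, (Rabs_right (- x)) by lra.
    apply Hp. lra.
Qed.

Lemma half_abs (x : R) : Rabs (x / 2) = Rabs x / 2.
Proof. unfold Rdiv. rewrite Rabs_mult, (Rabs_right (/ 2)) by lra. reflexivity. Qed.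

Lemma cos_lipschitz : lipschitz cos 1.
Proof.
  intros t t'. rewrite form2, !Rabs_mult.
  pose proof (sin_abs_le ((t - t') / 2)) as H. rewrite half_abs in H.
  pose proof (SIN_bound ((t + t') / 2)).
  assert (Rabs (sin ((t + t') / 2)) <= 1) by (apply Rabs_le; lra).
  replace (Rabs (-2)) with 2 by (rewrite Rabs_left; lra).
  pose proof (Rabs_pos (sin ((t - t') / 2))). pose proof (Rabs_pos (sin ((t + t') / 2))). nra.
Qed.

Lemma sin_lipschitz : lipschitz sin 1.
Proof.
  intros t t'. rewrite form4, !Rabs_mult.
  pose proof (sin_abs_le ((t - t') / 2)) as H. rewrite half_abs in H.
  pose proof (COS_bound ((t + t') / 2)).
  assert (Rabs (cos ((t + t') / 2)) <= 1) by (apply Rabs_le; lra).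
  replace (Rabs 2) with 2 by (rewrite Rabs_right; lra).
  pose proof (Rabs_pos (sin ((t - t') / 2))). pose proof (Rabs_pos (cos ((t + t') / 2))). nra.
Qed.

Lemma polar_lipschitz (r t r' t' : R) :
  Cnorm (Csub (polar r t) (polar r' t')) <= Rabs (r - r') + 2 * Rabs r' * Rabs (t - t').
Proof.
  replace (Csub (polar r t) (polar r' t'))
    with (Cadd (polar (r - r') t) (r' * (cos t - cos t'), r' * (sin t - sin t'))%R)
    by (unfold Csub, Cadd, Copp, polar; ceq).
  eapply Rle_trans; [apply cn_add |]. rewrite cn_polar. apply Rplus_le_compat_l.
  eapply Rle_trans; [apply cn_le_abs |]. cbn [fst snd]. rewrite !Rabs_mult.
  pose proof (cos_lipschitz t t'). pose proof (sin_lipschitz t t'). pose proof (Rabs_pos r'). nra.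
Qed.

(** * Finite sums and absolutely convergent series of complex numbers *)

Fixpoint csum (u : nat -> Cx) (N : nat) : Cx :=
  match N with O => u O | S M => Cadd (csum u M) (u (S M)) end.

Lemma lac_psum_csum (a : nat -> Cx) (n : nat -> nat) (z : Cx) (N : nat) :
  lac_psum a n z N = csum (fun k => Cmul (a k) (Cpow z (n k))) N.
Proof. induction N; simpl; [reflexivity | rewrite IHN; reflexivity]. Qed.

Lemma cn_csum (u : nat -> Cx) (N : nat) :
  Cnorm (csum u N) <= sum_f_R0 (fun k => Cnorm (u k)) N.
Proof. induction N; simpl; [lra |]. eapply Rle_trans; [apply cn_add | lra]. Qed.

Lemma csum_sub (u v : nat -> Cx) (N : nat) :
  Csub (csum u N) (csum v N) = csum (fun k => Csub (u k) (v k)) N.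
Proof. induction N; simpl; [reflexivity |]. rewrite <- IHN. unfold Csub, Cadd, Copp. ceq. Qed.

Lemma csum_mul (w : Cx) (u : nat -> Cx) (N : nat) :
  Cmul (csum u N) w = csum (fun k => Cmul (u k) w) N.
Proof. induction N; simpl; [reflexivity |]. rewrite <- IHN. unfold Cmul, Cadd. ceq. Qed.

Lemma csum_fst (u : nat -> Cx) (N : nat) : fst (csum u N) = sum_f_R0 (fun k => fst (u k)) N.
Proof. induction N; simpl; [reflexivity | rewrite IHN; reflexivity]. Qed.

Lemma csum_snd (u : nat -> Cx) (N : nat) : snd (csum u N) = sum_f_R0 (fun k => snd (u k)) N.
Proof. induction N; simpl; [reflexivity | rewrite IHN; reflexivity]. Qed.

Lemma psum_mono (u : nat -> R) (i j : nat) :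
  (forall k, 0 <= u k) -> (i <= j)%nat -> sum_f_R0 u i <= sum_f_R0 u j.
Proof. intros Hu Hij. induction Hij; [lra |]. simpl. pose proof (Hu (S m)). lra. Qed.

Lemma term_le_psum (b : nat -> R) (m : nat) : (forall k, 0 <= b k) -> b m <= sum_f_R0 b m.
Proof. intros Hb. destruct m; simpl; [lra |]. pose proof (cond_pos_sum b m Hb). lra. Qed.

Lemma bounded_series_cv (u : nat -> R) (M : R) :
  (forall k, 0 <= u k) -> (forall N, sum_f_R0 u N <= M) -> exists Sl, infinite_sum u Sl.
Proof.
  intros Hu HM. destruct (growing_cv (sum_f_R0 u)) as [Sl HS].
  - intros m. simpl. pose proof (Hu (S m)). lra.
  - exists M. intros x [i ->]. apply HM.
  - exists Sl. exact HS.
Qed.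

Lemma le_of_null_excess (e : nat -> R) (v B : R) :
  Un_cv e 0 -> (forall N, v <= B + e N) -> v <= B.
Proof.
  intros He Hv. apply Rnot_lt_le. intros Hlt.
  destruct (He (v - B) ltac:(lra)) as [N HN]. specialize (HN N (Nat.le_refl N)).
  unfold R_dist in HN. rewrite Rminus_0_r in HN. specialize (Hv N).
  pose proof (Rle_abs (e N)). lra.
Qed.

Lemma null_squeeze (e w : nat -> R) :
  Un_cv e 0 -> (forall N, 0 <= w N <= e N) -> Un_cv w 0.
Proof.
  intros He Hw eps Heps. destruct (He eps Heps) as [N HN]. exists N. intros m Hm.
  specialize (HN m Hm). specialize (Hw m). unfold R_dist in *. rewrite Rminus_0_r in *.
  rewrite Rabs_right by lra. pose proof (Rle_abs (e m)). lra.
Qed.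

Lemma null_plus (e1 e2 : nat -> R) :
  Un_cv e1 0 -> Un_cv e2 0 -> Un_cv (fun N => e1 N + e2 N) 0.
Proof. intros H1 H2. replace 0 with (0 + 0) by ring. apply CV_plus; auto. Qed.

Lemma null_scal (e : nat -> R) (c : R) : Un_cv e 0 -> Un_cv (fun N => c * e N) 0.
Proof.
  intros H. replace 0 with (c * 0) by ring. apply CV_mult; [| exact H].
  intros eps Heps. exists O. intros. unfold R_dist. rewrite Rminus_diag, Rabs_R0. exact Heps.
Qed.

Lemma null_of_cv (u : nat -> R) (l : R) : Un_cv u l -> Un_cv (fun N => Rabs (u N - l)) 0.
Proof.
  intros H eps Heps. destruct (H eps Heps) as [N HN]. exists N. intros m Hm.
  specialize (HN m Hm). unfold R_dist in *. rewrite Rminus_0_r, Rabs_Rabsolu. exact HN.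
Qed.

Definition climit (u : nat -> Cx) : Cx :=
  (Series (fun k => fst (u k)), Series (fun k => snd (u k))).

Lemma climit_cv (u : nat -> Cx) :
  (exists S, infinite_sum (fun k => Cnorm (u k)) S) ->
  Un_cv (fun N => Cnorm (Csub (csum u N) (climit u))) 0.
Proof.
  intros [Sl HS].
  assert (HexN : ex_series (fun k => Cnorm (u k))) by (exists Sl; apply is_series_Reals; auto).
  assert (Hcomp : forall p : Cx -> R, (forall z, Rabs (p z) <= Cnorm z) ->
            Un_cv (sum_f_R0 (fun k => p (u k))) (Series (fun k => p (u k)))).
  { intros p Hp. apply is_series_Reals, Series_correct, ex_series_Rabs.
    apply (ex_series_le (K := R_AbsRing) (V := R_CompleteNormedModule) _ (fun k => Cnorm (u k)));
      [| exact HexN].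
    intros k. change (norm (Rabs (p (u k)))) with (Rabs (Rabs (p (u k)))).
    rewrite Rabs_Rabsolu. apply Hp. }
  apply (null_squeeze (fun N => Rabs (sum_f_R0 (fun k => fst (u k)) N - Series (fun k => fst (u k)))
                               + Rabs (sum_f_R0 (fun k => snd (u k)) N - Series (fun k => snd (u k))))).
  - apply null_plus; apply null_of_cv, Hcomp; [apply cn_fst | apply cn_snd].
  - intros N. split; [apply cn_pos |].
    eapply Rle_trans; [apply cn_le_abs |]. unfold Csub, Cadd, Copp, climit. cbn [fst snd].
    rewrite csum_fst, csum_snd. right. reflexivity.
Qed.

Lemma limit_norm_le (u : nat -> Cx) (F : Cx) (B : R) :
  Un_cv (fun N => Cnorm (Csub (csum u N) F)) 0 ->
  (forall N, sum_f_R0 (fun k => Cnorm (u k)) N <= B) -> Cnorm F <= B.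
Proof.
  intros Hcv HB. apply (le_of_null_excess _ _ _ Hcv). intros N.
  eapply Rle_trans; [apply (cn_le_sub F (csum u N)) |].
  rewrite cn_sub_sym. apply Rplus_le_compat_r. eapply Rle_trans; [apply cn_csum | apply HB].
Qed.

Lemma limit_diff_le (u v : nat -> Cx) (F G : Cx) (B : R) :
  Un_cv (fun N => Cnorm (Csub (csum u N) F)) 0 ->
  Un_cv (fun N => Cnorm (Csub (csum v N) G)) 0 ->
  (forall N, sum_f_R0 (fun k => Cnorm (Csub (u k) (v k))) N <= B) -> Cnorm (Csub F G) <= B.
Proof.
  intros Hu Hv HB. apply (le_of_null_excess _ _ _ (null_plus _ _ Hu Hv)). intros N.
  pose proof (cn_sub_tri F (csum u N) G). pose proof (cn_sub_tri (csum u N) (csum v N) G).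
  rewrite (cn_sub_sym F (csum u N)) in H. rewrite csum_sub in H0.
  pose proof (cn_csum (fun k => Csub (u k) (v k)) N). specialize (HB N). lra.
Qed.

Lemma pow_le_one (x : R) (m : nat) : 0 <= x <= 1 -> x ^ m <= 1.
Proof. intros H. induction m; simpl; [lra |]. pose proof (pow_le x m (proj1 H)). nra. Qed.

Lemma pow_decr (Q : R) (i j : nat) : 0 <= Q <= 1 -> (i <= j)%nat -> Q ^ j <= Q ^ i.
Proof. intros HQ Hij. induction Hij; [lra |]. simpl. pose proof (pow_le Q m (proj1 HQ)). nra. Qed.

Lemma cpow_lipschitz (z w : Cx) (Q : R) (m : nat) :
  Cnorm z <= Q -> Cnorm w <= Q ->
  Cnorm (Csub (Cpow z m) (Cpow w m)) <= INR m * Q ^ (m - 1) * Cnorm (Csub z w).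
Proof.
  intros Hz Hw. assert (HQ : 0 <= Q) by (pose proof (cn_pos z); lra).
  induction m as [|m IH].
  - replace (Csub (Cpow z 0) (Cpow w 0)) with C0 by (unfold Csub, Cadd, Copp, C0; simpl; ceq).
    rewrite cn_zero. simpl. pose proof (cn_pos (Csub z w)). lra.
  - change (Cnorm (Csub (Cmul z (Cpow z m)) (Cmul w (Cpow w m)))
              <= INR (S m) * Q ^ (S m - 1) * Cnorm (Csub z w)).
    replace (Csub (Cmul z (Cpow z m)) (Cmul w (Cpow w m)))
      with (Cadd (Cmul z (Csub (Cpow z m) (Cpow w m))) (Cmul (Csub z w) (Cpow w m))).
    2: { generalize (Cpow z m) (Cpow w m). intros [] []. destruct z, w.
         unfold Csub, Cadd, Copp, Cmul. ceq. }
    eapply Rle_trans; [apply cn_add |]. rewrite !cn_mul, cn_pow.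
    pose proof (cn_pos (Csub z w)). pose proof (cn_pos (Csub (Cpow z m) (Cpow w m))).
    assert (Hwm : Cnorm w ^ m <= Q ^ m) by (apply pow_incr; split; [apply cn_pos | auto]).
    replace (S m - 1)%nat with m by lia. rewrite S_INR.
    assert (Q * (INR m * Q ^ (m - 1)) <= INR m * Q ^ m).
    { destruct m; [simpl; lra |]. replace (S m - 1)%nat with m by lia. simpl. lra. }
    assert (Cnorm z * Cnorm (Csub (Cpow z m) (Cpow w m))
            <= Q * (INR m * Q ^ (m - 1) * Cnorm (Csub z w)))
      by (apply Rmult_le_compat; auto; apply cn_pos).
    assert (Cnorm (Csub z w) * Cnorm w ^ m <= Cnorm (Csub z w) * Q ^ m)
      by (apply Rmult_le_compat_l; auto).
    nra.
Qed.

Definition cpow_taylor_rem (z h : Cx) (m : nat) : Cx :=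
  Csub (Csub (Cpow (Cadd z h) m) (Cpow z m)) (Cmul (INR m, 0) (Cmul (Cpow z (m - 1)) h)).

Lemma cpow_taylor_rem_S (z h : Cx) (m : nat) :
  cpow_taylor_rem z h (S m) =
  Cadd (Cmul (Cadd z h) (cpow_taylor_rem z h m)) (Cmul (INR m, 0) (Cmul (Cpow z (m - 1)) (Cmul h h))).
Proof.
  unfold cpow_taylor_rem. destruct m.
  - simpl. destruct z, h. unfold Csub, Cadd, Copp, Cmul. simpl. ceq.
  - replace (S (S m) - 1)%nat with (S m) by lia. replace (S m - 1)%nat with m by lia.
    change (Cpow (Cadd z h) (S (S m))) with (Cmul (Cadd z h) (Cpow (Cadd z h) (S m))).
    change (Cpow z (S (S m))) with (Cmul z (Cpow z (S m))).
    change (Cpow z (S m)) with (Cmul z (Cpow z m)).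
    rewrite (S_INR (S m)).
    generalize (Cpow (Cadd z h) (S m)) (Cpow z m). intros [] []. destruct z, h.
    unfold Csub, Cadd, Copp, Cmul. ceq.
Qed.

Lemma cpow_taylor_rem_bound (z h : Cx) (Q : R) (m : nat) :
  Cnorm z <= Q -> Cnorm (Cadd z h) <= Q -> Q <= 1 ->
  Cnorm (cpow_taylor_rem z h m) <= INR m ^ 2 * Q ^ (m - 2) * Cnorm h ^ 2.
Proof.
  intros Hz Hzh HQ1. assert (HQ : 0 <= Q) by (pose proof (cn_pos z); lra).
  pose proof (cn_pos h). pose proof (pow2_ge_0 (Cnorm h)).
  induction m as [|m IH].
  - replace (cpow_taylor_rem z h 0) with C0
      by (destruct h; unfold cpow_taylor_rem, Csub, Cadd, Copp, Cmul, C0; simpl; ceq).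
    rewrite cn_zero. simpl. lra.
  - rewrite cpow_taylor_rem_S. eapply Rle_trans; [apply cn_add |].
    rewrite !cn_mul, cn_real, cn_pow, Rabs_right by (apply Rle_ge, pos_INR).
    pose proof (cn_pos (cpow_taylor_rem z h m)). pose proof (pos_INR m).
    pose proof (pow_le Q (S m - 2) HQ).
    (* S m - 2 = m - 1, and Q Q^(m-2) <= Q^(m-1) *)
    assert (T1 : Cnorm (Cadd z h) * Cnorm (cpow_taylor_rem z h m)
                 <= INR m ^ 2 * Q ^ (S m - 2) * Cnorm h ^ 2).
    { apply Rle_trans with (Q * (INR m ^ 2 * Q ^ (m - 2) * Cnorm h ^ 2)).
      - apply Rmult_le_compat; auto. apply cn_pos.
      - assert (Q * Q ^ (m - 2) <= Q ^ (S m - 2)).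
        { destruct m as [|[|m]]; simpl; [lra | lra |].
          replace (m - 0)%nat with m by lia. lra. }
        replace (Q * (INR m ^ 2 * Q ^ (m - 2) * Cnorm h ^ 2))
          with ((Q * Q ^ (m - 2)) * (INR m ^ 2 * Cnorm h ^ 2)) by ring.
        replace (INR m ^ 2 * Q ^ (S m - 2) * Cnorm h ^ 2)
          with (Q ^ (S m - 2) * (INR m ^ 2 * Cnorm h ^ 2)) by ring.
        apply Rmult_le_compat_r; [nra | auto]. }
    assert (T2 : INR m * (Cnorm z ^ (m - 1) * (Cnorm h * Cnorm h))
                 <= INR m * Q ^ (S m - 2) * Cnorm h ^ 2).
    { assert (Cnorm z ^ (m - 1) <= Q ^ (S m - 2)).
      { eapply Rle_trans; [apply pow_incr; split; [apply cn_pos | exact Hz] |].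
        apply pow_decr; [lra | lia]. }
      replace (INR m * Q ^ (S m - 2) * Cnorm h ^ 2)
        with (INR m * (Q ^ (S m - 2) * (Cnorm h * Cnorm h))) by ring.
      apply Rmult_le_compat_l; [lra |]. apply Rmult_le_compat_r; [nra | auto]. }
    rewrite S_INR. assert (0 <= Q ^ (S m - 2) * Cnorm h ^ 2) by (apply Rmult_le_pos; auto).
    nra.
Qed.

Lemma amgm (x w : R) : 0 < w -> x <= (x ^ 2 * w + / w) / 2.
Proof.
  intros Hw. assert (0 <= (x * w - 1) ^ 2 / w) by (apply Rdiv_le_0_compat; [apply pow2_ge_0 | lra]).
  replace ((x ^ 2 * w + / w) / 2) with (x + ((x * w - 1) ^ 2 / w) / 2) by (field; lra). lra.
Qed.

(* Optimizing the parameter in S <= (t X + Y / t) / 2 gives S^2 <= X Y. *)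
Lemma sq_le_of_amgm_bounds (S X Y : R) : 0 <= S -> 0 <= X -> 0 < Y ->
  (forall t, 0 < t -> S <= (t * X + Y / t) / 2) -> S ^ 2 <= X * Y.
Proof.
  intros HS HX HY H.
  destruct (Req_dec X 0) as [->|HX0].
  - destruct (Req_dec S 0) as [->|HS0]; [simpl; lra |].
    exfalso. specialize (H (Y / S) ltac:(apply Rdiv_lt_0_compat; lra)).
    replace ((Y / S * 0 + Y / (Y / S)) / 2) with (S / 2) in H by (field; lra). lra.
  - assert (Hsx : 0 < sqrt X) by (apply sqrt_lt_R0; lra).
    assert (Hsy : 0 < sqrt Y) by (apply sqrt_lt_R0; lra).
    set (t := sqrt Y / sqrt X).
    specialize (H t ltac:(apply Rdiv_lt_0_compat; lra)).
    assert (E : (t * X + Y / t) / 2 = sqrt X * sqrt Y).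
    { assert (EX : X = sqrt X * sqrt X) by (rewrite sqrt_sqrt; lra).
      assert (EY : Y = sqrt Y * sqrt Y) by (rewrite sqrt_sqrt; lra).
      rewrite EX at 1. rewrite EY at 1. unfold t. field. split; lra. }
    rewrite E in H.
    assert (S ^ 2 <= (sqrt X * sqrt Y) ^ 2) by (apply pow_incr; lra).
    rewrite Rpow_mult_distr, !pow2_sqrt in H0 by lra. exact H0.
Qed.

Lemma sum_inv_sq (N : nat) : sum_f_R0 (fun k => / INR (S k) ^ 2) N <= 2 - / INR (S N).
Proof.
  induction N.
  - simpl. lra.
  - rewrite tech5. assert (0 < INR (S N)) by (apply lt_0_INR; lia).
    rewrite (S_INR (S N)). set (x := INR (S N)) in *.
    assert (/ (x + 1) ^ 2 <= / x - / (x + 1)).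
    { replace (/ x - / (x + 1)) with (/ (x * (x + 1))) by (field; lra).
      apply Rinv_le_contravar; nra. }
    lra.
Qed.

Lemma subseries_le (b : nat -> R) (sg : nat -> nat) (N : nat) :
  (forall k, 0 <= b k) -> (forall k, (sg k < sg (S k))%nat) ->
  sum_f_R0 (fun k => b (sg k)) N <= sum_f_R0 b (sg N).
Proof.
  intros Hb Hs. induction N.
  - simpl. apply term_le_psum; auto.
  - simpl. specialize (Hs N). destruct (sg (S N)) as [|p] eqn:E; [lia |].
    simpl. assert (sum_f_R0 b (sg N) <= sum_f_R0 b p) by (apply psum_mono; auto; lia). lra.
Qed.

Lemma telescope (p : nat -> R) (N : nat) :
  sum_f_R0 (fun k => p (S k) - p k) N = p (S N) - p O.
Proof. induction N; simpl; [ring | rewrite IHN; ring]. Qed.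

Lemma cube_geom_ratio (Q : R) : 0 < Q ->
  is_lim_seq (fun j => Rabs (INR (S j + 2) ^ 3 * Q ^ S j / (INR (j + 2) ^ 3 * Q ^ j))) Q.
Proof.
  intros HQ.
  assert (H1 : is_lim_seq (fun j => 1 + / INR (j + 2)) 1).
  { assert (H0 : is_lim_seq (fun j => / INR (j + 2)) 0).
    { apply (is_lim_seq_incr_n (fun j => / INR j) 2 0).
      replace (Finite 0) with (Rbar_inv p_infty) by reflexivity.
      apply is_lim_seq_inv; [apply is_lim_seq_INR | discriminate]. }
    pose proof (is_lim_seq_plus' _ _ 1 0 (is_lim_seq_const 1) H0) as H.
    rewrite Rplus_0_r in H. exact H. }
  assert (H3 := is_lim_seq_mult' _ _ _ _ (is_lim_seq_mult' _ _ _ _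
                  (is_lim_seq_mult' _ _ _ _ H1 H1) H1) (is_lim_seq_const Q)).
  rewrite !Rmult_1_l in H3. eapply is_lim_seq_ext; [| exact H3].
  intros j. symmetry. replace (S j + 2)%nat with (S (j + 2)) by lia. rewrite S_INR.
  assert (0 < INR (j + 2)) by (apply lt_0_INR; lia).
  assert (0 < Q ^ j) by (apply pow_lt; lra).
  rewrite Rabs_right.
  - simpl. field. repeat split; try lra; apply pow_nonzero; lra.
  - apply Rle_ge, Rlt_le, Rdiv_lt_0_compat; apply Rmult_lt_0_compat; try apply pow_lt; lra.
Qed.

(* sum_m m^3 Q^(m-2) < oo for 0 < Q < 1, by d'Alembert's ratio test. *)
Lemma cube_geom_series (Q : R) : 0 < Q < 1 ->
  exists T, forall M, sum_f_R0 (fun m => INR m ^ 3 * Q ^ (m - 2)) M <= T.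
Proof.
  intros HQ.
  set (v := fun j => INR (j + 2) ^ 3 * Q ^ j).
  assert (Hv0 : forall j, 0 < v j).
  { intros j. unfold v. apply Rmult_lt_0_compat; apply pow_lt; [apply lt_0_INR; lia | lra]. }
  destruct (ex_series_DAlembert v Q ltac:(lra) (fun j => Rgt_not_eq _ _ (Hv0 j))
              (cube_geom_ratio Q ltac:(lra))) as [T0 HT0].
  apply is_series_Reals in HT0.
  assert (HT0' : infinite_sum v T0).
  { intros eps Heps. destruct (HT0 eps Heps) as [N HN]. exists N. intros m Hm.
    specialize (HN m Hm). replace (sum_f_R0 v m) with (sum_f_R0 (fun j => Rabs (v j)) m); auto.
    apply sum_eq. intros. apply Rabs_right, Rle_ge, Rlt_le, Hv0. }
  exists (1 + T0). intros M.
  set (u := fun m => INR m ^ 3 * Q ^ (m - 2)).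
  assert (Hu : forall m, 0 <= u m)
    by (intros m; unfold u; apply Rmult_le_pos; apply pow_le; [apply pos_INR | lra]).
  assert (E : forall J, sum_f_R0 u (S (S J)) = 1 + sum_f_R0 v J).
  { induction J.
    - unfold u, v. simpl. ring.
    - rewrite tech5, IHJ. simpl sum_f_R0 at 2. unfold u, v.
      replace (S (S (S J)) - 2)%nat with (S J) by lia.
      replace (S J + 2)%nat with (S (S (S J))) by lia. ring. }
  eapply Rle_trans; [apply (psum_mono u M (S (S M)) Hu); lia |].
  rewrite E. pose proof (sum_incr v M T0 HT0' (fun j => Rlt_le _ _ (Hv0 j))). lra.
Qed.

Lemma bernoulli2 (v : R) (m : nat) : 0 <= v ->
  1 + INR m * v + INR m * (INR m - 1) / 2 * v ^ 2 <= (1 + v) ^ m.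
Proof.
  intros Hv. induction m.
  - simpl. lra.
  - rewrite S_INR. simpl pow. pose proof (pos_INR m).
    assert (0 <= INR m * (INR m - 1) / 2 * v ^ 3).
    { destruct m; [simpl; lra |]. rewrite S_INR. pose proof (pos_INR m).
      apply Rmult_le_pos; [| apply pow_le; lra]. apply Rmult_le_pos; [| lra]. nra. }
    nra.
Qed.

Lemma sq_mul_pow_le (s : R) (m : nat) : 0 < s < 1 -> (INR m * (1 - s)) ^ 2 * s ^ m <= 2.
Proof.
  intros Hs. set (v := / s - 1). set (u := 1 - s).
  assert (Hvu : u <= v).
  { unfold u, v. assert (/ s >= 1 + (1 - s)).
    { apply Rle_ge. apply (Rmult_le_reg_r s); [lra |]. rewrite Rinv_l by lra. nra. }
    lra. }
  assert (Hu : 0 < u <= 1) by (unfold u; lra).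
  assert (Hb := bernoulli2 v m ltac:(lra)).
  assert (E : (1 + v) ^ m * s ^ m = 1).
  { rewrite <- Rpow_mult_distr. unfold v. replace ((1 + (/ s - 1)) * s) with 1 by (field; lra).
    apply pow1. }
  pose proof (pos_INR m).
  assert (Hm2 : (INR m * u) ^ 2 <= 2 * (1 + INR m * v + INR m * (INR m - 1) / 2 * v ^ 2)).
  { destruct m; [simpl; lra |].
    rewrite S_INR in *. set (x := INR m) in *. assert (0 <= x) by apply pos_INR.
    assert (Huv : u * u <= v) by nra.
    assert (H1 : (x + 1) * (u * u) <= (x + 1) * v) by (apply Rmult_le_compat_l; lra).
    assert (H2 : x * (x + 1) * (u * u) <= x * (x + 1) * (v * v)) by (apply Rmult_le_compat_l; nra).
    assert (0 <= (x + 1) * v) by nra.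
    replace (((x + 1) * u) ^ 2) with (x * (x + 1) * (u * u) + (x + 1) * (u * u)) by ring.
    replace (2 * (1 + (x + 1) * v + (x + 1) * (x + 1 - 1) / 2 * v ^ 2))
      with (2 + 2 * ((x + 1) * v) + x * (x + 1) * (v * v)) by field.
    lra. }
  assert (0 < s ^ m) by (apply pow_lt; lra).
  apply (Rmult_le_compat_r (s ^ m)) in Hm2; [| lra].
  apply (Rmult_le_compat_r (s ^ m)) in Hb; [| lra]. rewrite E in Hb.
  fold u. nra.
Qed.

(* One step of the lacunary telescoping: with p(x) = x/(1+x), a term x S with
   x^2 S <= 2 is controlled by the increment of p between x and x' >= lam x. *)
Lemma lacunary_step (lam x x' S : R) :
  1 < lam -> 0 <= x -> lam * x <= x' -> 0 < S <= 1 -> x ^ 2 * S <= 2 ->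
  x * S <= (10 * lam / (lam - 1)) * (x' / (1 + x') - x / (1 + x)).
Proof.
  intros Hl Hx Hx' HS Hx2.
  assert (Hmono : lam * x / (1 + lam * x) <= x' / (1 + x')).
  { assert (0 <= lam * x) by nra.
    assert (x' / (1 + x') - lam * x / (1 + lam * x) = (x' - lam * x) / ((1 + x') * (1 + lam * x)))
      by (field; split; lra).
    assert (0 <= (x' - lam * x) / ((1 + x') * (1 + lam * x)))
      by (apply Rdiv_le_0_compat; [lra | apply Rmult_lt_0_compat; lra]).
    lra. }
  assert (E : lam * x / (1 + lam * x) - x / (1 + x) = (lam - 1) * x / ((1 + lam * x) * (1 + x)))
    by (field; nra).
  assert (Hden : x * S * ((1 + lam * x) * (1 + x)) <= 10 * lam * x).
  { assert ((1 + lam * x) * (1 + x) <= 2 * lam * (1 + x ^ 2)).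
    { assert ((1 + lam * x) * (1 + x) <= lam * (1 + x) * (1 + x)) by (apply Rmult_le_compat_r; lra).
      pose proof (pow2_ge_0 (x - 1)). nra. }
    assert (S * ((1 + lam * x) * (1 + x)) <= 6 * lam).
    { apply Rle_trans with (S * (2 * lam * (1 + x ^ 2))); [apply Rmult_le_compat_l; lra | nra]. }
    assert (x * (S * ((1 + lam * x) * (1 + x))) <= x * (10 * lam)) by (apply Rmult_le_compat_l; lra).
    nra. }
  assert (x * S <= (10 * lam / (lam - 1)) * ((lam - 1) * x / ((1 + lam * x) * (1 + x)))).
  { replace ((10 * lam / (lam - 1)) * ((lam - 1) * x / ((1 + lam * x) * (1 + x))))
      with (10 * lam * x / ((1 + lam * x) * (1 + x))) by (field; nra).
    apply (Rmult_le_reg_r ((1 + lam * x) * (1 + x))); [nra |].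
    replace (10 * lam * x / ((1 + lam * x) * (1 + x)) * ((1 + lam * x) * (1 + x)))
      with (10 * lam * x) by (field; nra). lra. }
  assert (0 < 10 * lam / (lam - 1)) by (apply Rdiv_lt_0_compat; lra).
  nra.
Qed.

(** * The radial kernel of a Carleson box and its logarithmic weight *)

Definition box_kernel (m : nat) (r : R) : R := INR m * ((1 + r) / 2) ^ m.

Lemma box_kernel_nonneg (m : nat) (r : R) : 0 <= r -> 0 <= box_kernel m r.
Proof. intros. unfold box_kernel. apply Rmult_le_pos; [apply pos_INR | apply pow_le; lra]. Qed.

Lemma pow_pred_le_kernel_base (r : R) (m : nat) : 0 <= r <= 1 -> (1 <= m)%nat ->
  r ^ (m - 1) <= 2 * ((1 + r) / 2) ^ m.
Proof.
  intros Hr Hm. destruct m as [|p]; [lia |]. replace (S p - 1)%nat with p by lia.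
  simpl. assert (r ^ p <= ((1 + r) / 2) ^ p) by (apply pow_incr; lra).
  pose proof (pow_le ((1 + r) / 2) p ltac:(lra)). nra.
Qed.

Lemma box_kernel_is_RInt (m : nat) (c rho : R) :
  is_RInt (box_kernel m) c rho
    (2 * INR m / (INR m + 1) * ((1 + rho) / 2) ^ (S m)
     - 2 * INR m / (INR m + 1) * ((1 + c) / 2) ^ (S m)).
Proof.
  assert (Hm : 0 < INR m + 1) by (pose proof (pos_INR m); lra).
  apply (is_RInt_derive (V := R_CompleteNormedModule)
           (fun r => 2 * INR m / (INR m + 1) * ((1 + r) / 2) ^ (S m))).
  - intros x _. unfold box_kernel. auto_derive; [exact I |].
    replace (match m with | 0%nat => 1 | S _ => INR m + 1 end) with (INR m + 1)
      by (destruct m; simpl; ring).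
    change ((1 + x) * / 2) with ((1 + x) / 2). field. lra.
  - intros x _. apply (ex_derive_continuous (K := R_AbsRing) (V := R_NormedModule)).
    unfold box_kernel. auto_derive. exact I.
Qed.

Lemma box_kernel_integral_bounds (m : nat) (c rho : R) :
  0 <= c <= rho -> rho <= 1 ->
  0 <= RInt (box_kernel m) c rho /\
  RInt (box_kernel m) c rho <= INR m * (rho - c) /\
  RInt (box_kernel m) c rho <= 2.
Proof.
  intros Hc Hr. pose proof (box_kernel_is_RInt m c rho) as H.
  pose proof (pos_INR m).
  assert (Hlin : RInt (box_kernel m) c rho <= INR m * (rho - c)).
  { eapply Rle_trans; [apply Rle_abs |]. rewrite Rmult_comm.
    apply abs_RInt_le_const; [lra | eexists; exact H |].
    intros t Ht. unfold box_kernel. rewrite Rabs_right.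
    - assert (((1 + t) / 2) ^ m <= 1) by (apply pow_le_one; lra). nra.
    - apply Rle_ge, Rmult_le_pos; [lra | apply pow_le; lra]. }
  rewrite (is_RInt_unique _ _ _ _ H) in *.
  set (P := fun x => ((1 + x) / 2) ^ (S m)).
  assert (HP : P c <= P rho) by (unfold P; apply pow_incr; lra).
  assert (HP0 : 0 <= P c) by (unfold P; apply pow_le; lra).
  assert (HP1 : P rho <= 1) by (unfold P; apply pow_le_one; lra).
  assert (Hk : 0 <= 2 * INR m / (INR m + 1) <= 2).
  { split; [apply Rdiv_le_0_compat; lra |]. apply (Rmult_le_reg_r (INR m + 1)); [lra |].
    replace (2 * INR m / (INR m + 1) * (INR m + 1)) with (2 * INR m) by (field; lra). lra. }
  fold (P rho) (P c) in *. split; [nra | split; [exact Hlin | nra]].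
Qed.

Lemma sq_le_exp (y : R) : 0 <= y -> y ^ 2 <= 4 * exp y.
Proof.
  intros Hy. replace y with (y / 2 + y / 2) at 2 by field. rewrite exp_plus.
  pose proof (exp_ineq1_le (y / 2)). nra.
Qed.

(* The heart of the logarithmic gain: if I <= min(nn h, 2) with 0 < h <= 1,
   then I log^2(1/h) <= 2 (1 + log^3 nn) + 8.  Split at h = 1/nn: for h >= 1/nn
   use log(1/h) <= log nn; for h < 1/nn use x log^2(1/x) <= 4 with x = nn h. *)
Lemma kernel_log_weight (I h nn : R) :
  0 < h <= 1 -> 1 <= nn -> 0 <= I -> I <= nn * h -> I <= 2 ->
  I * ln (/ h) ^ 2 <= 2 * (1 + ln nn ^ 3) + 8.
Proof.
  intros Hh Hn HI HIh HI2.
  set (L := ln (/ h)). set (ln_n := ln nn).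
  assert (Hlnn : 0 <= ln_n) by (unfold ln_n; rewrite <- ln_1; apply ln_le; lra).
  assert (Hcube : ln_n ^ 2 <= 1 + ln_n ^ 3) by (destruct (Rle_dec ln_n 1); nra).
  destruct (Rle_dec 1 (nn * h)) as [Hge | Hlt].
  - assert (HLn : L <= ln_n).
    { unfold L, ln_n. apply ln_le; [apply Rinv_0_lt_compat; lra |].
      apply (Rmult_le_reg_r h); [lra |]. rewrite Rinv_l by lra. lra. }
    assert (0 <= L) by (unfold L; rewrite <- ln_1; apply ln_le; [lra |];
                        rewrite <- Rinv_1; apply Rinv_le_contravar; lra).
    assert (L ^ 2 <= ln_n ^ 2) by (apply pow_incr; lra).
    assert (I * L ^ 2 <= 2 * L ^ 2) by (apply Rmult_le_compat_r; [apply pow2_ge_0 | lra]).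
    lra.
  - set (x := nn * h). assert (Hx : 0 < x < 1) by (unfold x; split; [nra | lra]).
    set (y := - ln x).
    assert (Hy : 0 < y).
    { assert (ln x < 0) by (rewrite <- ln_1; apply ln_increasing; lra). unfold y. lra. }
    assert (EL : L = ln_n + y).
    { unfold L, ln_n, y, x. rewrite ln_mult, ln_Rinv by lra. ring. }
    assert (Hxy : x * y ^ 2 <= 4).
    { assert (Ex : x = / exp y) by (unfold y; rewrite exp_Ropp, exp_ln by lra; field; lra).
      pose proof (sq_le_exp y ltac:(lra)). pose proof (exp_pos y). rewrite Ex.
      apply (Rmult_le_reg_r (exp y)); [exact H0 |]. field_simplify; lra. }
    assert (I * L ^ 2 <= x * L ^ 2) by (apply Rmult_le_compat_r; [apply pow2_ge_0 | unfold x; lra]).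
    assert (x * L ^ 2 <= 2 * x * ln_n ^ 2 + 2 * (x * y ^ 2)).
    { rewrite EL. assert (0 <= x * (ln_n - y) ^ 2) by (apply Rmult_le_pos; [lra | apply pow2_ge_0]).
      nra. }
    assert (x * ln_n ^ 2 <= ln_n ^ 2) by (pose proof (pow2_ge_0 ln_n); nra).
    lra.
Qed.

Lemma kernel_log_weight_arc (I l nn : R) :
  0 < l <= 2 * PI -> 1 <= nn -> 0 <= I -> I <= nn * (l / (2 * PI)) -> I <= 2 ->
  I * ln (2 / l) ^ 2 <= (20 + 4 * ln PI ^ 2) * (1 + ln nn ^ 3).
Proof.
  intros Hl Hn HI HIh HI2. pose proof PI_RGT_0 as HPI.
  set (h := l / (2 * PI)).
  assert (Hh : 0 < h <= 1).
  { unfold h. split; [apply Rdiv_lt_0_compat; lra |].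
    apply (Rmult_le_reg_r (2 * PI)); [lra |].
    replace (l / (2 * PI) * (2 * PI)) with l by (field; lra). lra. }
  pose proof (kernel_log_weight I h nn Hh Hn HI HIh HI2) as Hkey.
  assert (E : ln (2 / l) = ln (/ h) - ln PI).
  { unfold h. rewrite <- ln_div by (try apply Rinv_0_lt_compat; try apply Rdiv_lt_0_compat; lra).
    f_equal. field. lra. }
  rewrite E. set (L := ln (/ h)) in *.
  assert (0 <= ln nn ^ 3) by (apply pow_le; rewrite <- ln_1; apply ln_le; lra).
  pose proof (pow2_ge_0 (ln PI)). pose proof (pow2_ge_0 (L + ln PI)).
  assert (I * (L - ln PI) ^ 2 <= I * (2 * L ^ 2 + 2 * ln PI ^ 2)) by (apply Rmult_le_compat_l; nra).
  assert (I * (2 * ln PI ^ 2) <= 2 * (2 * ln PI ^ 2)) by (apply Rmult_le_compat_r; lra).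
  nra.
Qed.

Lemma radial_weight_bounds (r r' : R) : 0 <= r <= 1 -> 0 <= r' <= 1 ->
  Rabs ((1 - r ^ 2) * r) <= 1 /\
  Rabs ((1 - r ^ 2) * r - (1 - r' ^ 2) * r') <= 2 * Rabs (r - r').
Proof.
  intros Hr Hr'. split.
  - apply Rabs_le. split; [nra |]. assert (0 <= 1 - r ^ 2) by nra. nra.
  - replace ((1 - r ^ 2) * r - (1 - r' ^ 2) * r')
      with ((r - r') * (1 - (r * r + r * r' + r' * r'))) by ring.
    rewrite Rabs_mult, Rmult_comm. apply Rmult_le_compat_r; [apply Rabs_pos |].
    apply Rabs_le. split; nra.
Qed.

Lemma weighted_sq_lipschitz (p p' u v L1 L2 d e : R) :
  Rabs p <= 1 -> Rabs (p - p') <= 2 * e -> 0 <= u <= L1 -> 0 <= v <= L1 ->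
  Rabs (u - v) <= L2 * d -> 0 <= L2 -> 0 <= d ->
  Rabs (p * u ^ 2 - p' * v ^ 2) <= 2 * L1 * L2 * d + 2 * L1 ^ 2 * e.
Proof.
  intros Hp Hpp Hu Hv Huv HL2 Hd.
  replace (p * u ^ 2 - p' * v ^ 2) with (p * ((u - v) * (u + v)) + v ^ 2 * (p - p')) by ring.
  eapply Rle_trans; [apply Rabs_triang |]. rewrite !Rabs_mult.
  rewrite (Rabs_right (u + v)) by lra. rewrite (Rabs_right (v ^ 2)) by (apply Rle_ge, pow2_ge_0).
  pose proof (Rabs_pos p). pose proof (Rabs_pos (u - v)). pose proof (Rabs_pos (p - p')).
  assert (Rabs p * (Rabs (u - v) * (u + v)) <= 1 * ((L2 * d) * (2 * L1))).
  { apply Rmult_le_compat; auto; [apply Rmult_le_pos; lra | apply Rmult_le_compat; lra]. }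
  assert (v ^ 2 * Rabs (p - p') <= L1 ^ 2 * (2 * e))
    by (apply Rmult_le_compat; auto; [apply pow2_ge_0 | apply pow_incr; lra]).
  lra.
Qed.

(** * Hadamard gap sequences *)

Section Lacunary.
Variables (n : nat -> nat) (lambda : R).
Hypothesis Hn_pos : forall k, (0 < n k)%nat.
Hypothesis Hlam : 1 < lambda.
Hypothesis Hgap : forall k, INR (n (S k)) >= lambda * INR (n k).

Lemma gap_ge1 k : 1 <= INR (n k).
Proof. replace 1 with (INR 1) by reflexivity. apply le_INR, Hn_pos. Qed.

Lemma gap_pow k : lambda ^ k <= INR (n k).
Proof. induction k; simpl; [apply gap_ge1 |]. specialize (Hgap k). nra. Qed.

Lemma gap_strict k : (n k < n (S k))%nat.
Proof. apply INR_lt. specialize (Hgap k). pose proof (gap_ge1 k). nra. Qed.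

Lemma ln_gap_ge k : INR k * ln lambda <= ln (INR (n k)).
Proof. rewrite <- ln_pow by lra. apply ln_le; [apply pow_lt; lra | apply gap_pow]. Qed.

Lemma ln_gap_nonneg k : 0 <= ln (INR (n k)).
Proof. rewrite <- ln_1. apply ln_le; [lra | apply gap_ge1]. Qed.

Definition lac_const : R := 10 * lambda / (lambda - 1).

Lemma lac_const_pos : 0 < lac_const.
Proof. unfold lac_const. apply Rdiv_lt_0_compat; lra. Qed.

(* Each term is bounded by an increment of p_k = x_k / (1 + x_k), x_k = n_k (1 - s),
   and these increments telescope to at most 1. *)
Lemma lacunary_sum (s : R) (N : nat) : 0 < s < 1 ->
  sum_f_R0 (fun k => INR (n k) * s ^ (n k)) N <= lac_const / (1 - s).
Proof.
  intros Hs. set (u := 1 - s). assert (Hu : 0 < u) by (unfold u; lra).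
  set (x := fun k => INR (n k) * u).
  set (p := fun k => x k / (1 + x k)).
  assert (Hx : forall k, 0 <= x k) by (intros k; unfold x; pose proof (gap_ge1 k); nra).
  assert (Hterm : forall k, INR (n k) * s ^ (n k) <= (p (S k) - p k) * (lac_const / u)).
  { intros k. apply (Rmult_le_reg_r u); [exact Hu |].
    replace ((p (S k) - p k) * (lac_const / u) * u) with (lac_const * (p (S k) - p k))
      by (field; lra).
    replace (INR (n k) * s ^ n k * u) with (x k * s ^ n k) by (unfold x; ring).
    apply lacunary_step; auto.
    - unfold x. specialize (Hgap k). nra.
    - split; [apply pow_lt; lra | apply pow_le_one; lra].
    - unfold x. apply sq_mul_pow_le; auto. }
  eapply Rle_trans; [apply (sum_growing _ _ N Hterm) |].
  rewrite <- scal_sum, telescope.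
  assert (0 <= p 0%nat) by (unfold p; apply Rdiv_le_0_compat; [apply Hx | pose proof (Hx 0%nat); lra]).
  assert (p (S N) <= 1).
  { unfold p. pose proof (Hx (S N)). apply (Rmult_le_reg_r (1 + x (S N))); [lra |].
    replace (x (S N) / (1 + x (S N)) * (1 + x (S N))) with (x (S N)) by (field; lra). lra. }
  assert (0 < lac_const / u) by (apply Rdiv_lt_0_compat; [apply lac_const_pos | lra]).
  fold u. nra.
Qed.

(* sum_k n_k^3 Q^(n_k - 2) < oo, as a subseries of sum_m m^3 Q^(m-2). *)
Lemma gap_cube_sum (Q : R) : 0 < Q < 1 ->
  exists T, 0 <= T /\ forall N, sum_f_R0 (fun k => INR (n k) ^ 3 * Q ^ (n k - 2)) N <= T.
Proof.
  intros HQ. destruct (cube_geom_series Q HQ) as [T HT]. exists T. split.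
  - eapply Rle_trans; [| apply (HT O)]. simpl. lra.
  - intros N. eapply Rle_trans; [apply (subseries_le (fun m => INR m ^ 3 * Q ^ (m - 2)) n N) |].
    + intros m. apply Rmult_le_pos; apply pow_le; [apply pos_INR | lra].
    + apply gap_strict.
    + apply HT.
Qed.

(** * Coefficients with sum |a_k|^2 log^3 n_k < oo *)

Section Coefficients.
Variable a : nat -> Cx.

Definition absa (k : nat) : R := Cnorm (a k).
Definition log_weight (k : nat) : R := Cnorm (a k) ^ 2 * ln (INR (n k)) ^ 3.

Hypothesis Hweight : exists SW, infinite_sum log_weight SW.

Lemma absa_nonneg k : 0 <= absa k.
Proof. apply cn_pos. Qed.

Lemma log_weight_nonneg k : 0 <= log_weight k.
Proof. unfold log_weight. apply Rmult_le_pos; [apply pow2_ge_0 | apply pow_le, ln_gap_nonneg]. Qed.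

(* By AM-GM with weight log^3 n_k >= (k log lambda)^3:
   |a_k| <= (|a_k|^2 log^3 n_k + 4 / (log lambda)^3 / (k+1)^2) / 2  for k >= 1. *)
Lemma absa_le_weight k :
  absa (S k) <= (log_weight (S k) + / ln lambda ^ 3 * 4 * / INR (S (S k)) ^ 2) / 2.
Proof.
  set (mu := ln lambda). assert (Hmu : 0 < mu) by (unfold mu; rewrite <- ln_1; apply ln_increasing; lra).
  set (L := ln (INR (n (S k)))). set (x := INR (S k)).
  assert (HL : x * mu <= L) by apply ln_gap_ge.
  assert (Hx : 1 <= x) by (unfold x; rewrite S_INR; pose proof (pos_INR k); lra).
  assert (HL0 : 0 < L) by nra.
  eapply Rle_trans; [apply (amgm (absa (S k)) (L ^ 3)); apply pow_lt; lra |].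
  unfold log_weight. fold (absa (S k)). fold L.
  assert (/ L ^ 3 <= / mu ^ 3 * 4 * / INR (S (S k)) ^ 2); [| lra].
  rewrite S_INR. fold x.
  assert (/ L ^ 3 <= / (x * mu) ^ 3) by (apply Rinv_le_contravar; apply pow_lt || apply pow_incr; nra).
  assert (/ x ^ 3 <= 4 * / (x + 1) ^ 2).
  { apply (Rmult_le_reg_r (x ^ 3 * (x + 1) ^ 2)); [apply Rmult_lt_0_compat; apply pow_lt; lra |].
    field_simplify; try (apply pow_nonzero; lra); try lra. nra. }
  rewrite Rpow_mult_distr, Rinv_mult in H.
  assert (0 < / mu ^ 3) by (apply Rinv_0_lt_compat, pow_lt; lra).
  nra.
Qed.

(* Hence sum |a_k| < oo: f is a bounded function. *)
Lemma absa_summable : exists M, 0 <= M /\ (forall N, sum_f_R0 absa N <= M) /\ (forall k, absa k <= M).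
Proof.
  destruct Hweight as [SW HSW].
  set (c := / ln lambda ^ 3).
  assert (Hc : 0 < c) by (unfold c; apply Rinv_0_lt_compat, pow_lt; rewrite <- ln_1; apply ln_increasing; lra).
  assert (HSW0 : 0 <= SW) by (eapply Rle_trans; [| apply (sum_incr _ 0 SW HSW log_weight_nonneg)];
                             apply log_weight_nonneg).
  set (M := absa 0 + (SW + c * 4 * 2) / 2).
  assert (Hsum : forall N, sum_f_R0 absa N <= M).
  { intros N. destruct N as [|N]; [unfold M; simpl; pose proof (absa_nonneg 0); lra |].
    rewrite decomp_sum by lia. simpl pred. unfold M. apply Rplus_le_compat_l.
    eapply Rle_trans; [apply (sum_growing _ (fun k => log_weight (S k) * / 2 + / INR (S (S k)) ^ 2 * (c * 4 / 2))) |].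
    - intros k. eapply Rle_trans; [apply absa_le_weight | right; fold c; field; apply not_0_INR; lia].
    - rewrite plus_sum, <- !scal_sum.
      assert (sum_f_R0 (fun k => log_weight (S k)) N <= SW).
      { pose proof (sum_incr _ (S N) SW HSW log_weight_nonneg).
        rewrite decomp_sum in H by lia. simpl pred in H. pose proof (log_weight_nonneg 0). lra. }
      assert (sum_f_R0 (fun k => / INR (S (S k)) ^ 2) N <= 2).
      { pose proof (sum_inv_sq (S N)). rewrite decomp_sum in H0 by lia. simpl pred in H0.
        assert (0 < / INR (S (S N))) by (apply Rinv_0_lt_compat, lt_0_INR; lia).
        assert (0 < / INR 1 ^ 2) by (simpl; lra). lra. }
      nra. }
  exists M. split; [| split; [exact Hsum |]].
  - pose proof (absa_nonneg 0). unfold M. lra.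
  - intros k. eapply Rle_trans; [apply term_le_psum, absa_nonneg | apply Hsum].
Qed.

Lemma weighted_sum_bounded (Q : R) (w : nat -> R) : 0 < Q < 1 ->
  (forall k, 0 <= w k <= INR (n k) ^ 3 * Q ^ (n k - 2)) ->
  exists B, 0 <= B /\ forall N, sum_f_R0 (fun k => absa k * w k) N <= B.
Proof.
  intros HQ Hw. destruct absa_summable as [M [HM [_ HAk]]].
  destruct (gap_cube_sum Q HQ) as [T [HT HTs]].
  exists (T * M). split; [apply Rmult_le_pos; auto |]. intros N.
  eapply Rle_trans; [apply (sum_growing _ (fun k => (INR (n k) ^ 3 * Q ^ (n k - 2)) * M)) |].
  - intros k. specialize (Hw k). pose proof (absa_nonneg k). specialize (HAk k).
    rewrite Rmult_comm. apply Rmult_le_compat; lra.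
  - rewrite <- scal_sum, Rmult_comm. apply Rmult_le_compat_r; auto.
Qed.

Lemma first_deriv_weight (Q : R) k : 0 < Q < 1 ->
  0 <= INR (n k) * Q ^ (n k - 1) <= INR (n k) ^ 3 * Q ^ (n k - 2).
Proof.
  intros HQ. pose proof (gap_ge1 k). split.
  - apply Rmult_le_pos; [lra | apply pow_le; lra].
  - apply Rmult_le_compat; [lra | apply pow_le; lra | simpl; nra | apply pow_decr; [lra | lia]].
Qed.

Lemma second_deriv_weight (Q : R) k : 0 < Q < 1 ->
  0 <= INR (n k) * INR (n k) * Q ^ (n k - 2) <= INR (n k) ^ 3 * Q ^ (n k - 2).
Proof.
  intros HQ. pose proof (gap_ge1 k). pose proof (pow_le Q (n k - 2) ltac:(lra)). split.
  - apply Rmult_le_pos; [nra | auto].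
  - apply Rmult_le_compat_r; auto. simpl. nra.
Qed.


(** * The gap series and its termwise derivative *)

Variable f : Cx -> Cx.
Hypothesis Hf_series : forall z, inD z ->
  Un_cv (fun N => Cnorm (Csub (lac_psum a n z N) (f z))) 0.

Definition gap_term (z : Cx) (k : nat) : Cx := Cmul (a k) (Cpow z (n k)).
Definition gap_dterm (z : Cx) (k : nat) : Cx :=
  Cmul (a k) (Cmul (INR (n k), 0) (Cpow z (n k - 1))).

Definition fderiv (z : Cx) : Cx := climit (gap_dterm z).

Lemma gap_series_cv (z : Cx) : inD z ->
  Un_cv (fun N => Cnorm (Csub (csum (gap_term z) N) (f z))) 0.
Proof.
  intros Hz eps Heps. destruct (Hf_series z Hz eps Heps) as [N HN]. exists N. intros m Hm.
  specialize (HN m Hm). rewrite lac_psum_csum in HN. exact HN.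
Qed.

Lemma cn_gap_term (z : Cx) k : Cnorm (gap_term z k) = absa k * Cnorm z ^ n k.
Proof. unfold gap_term. rewrite cn_mul, cn_pow. reflexivity. Qed.

Lemma cn_gap_dterm (z : Cx) k :
  Cnorm (gap_dterm z k) = absa k * (INR (n k) * Cnorm z ^ (n k - 1)).
Proof.
  unfold gap_dterm. rewrite !cn_mul, cn_pow, cn_real, Rabs_right by (apply Rle_ge, pos_INR).
  reflexivity.
Qed.

Lemma gap_term_diff (z w : Cx) (Q : R) k : Cnorm z <= Q -> Cnorm w <= Q ->
  Cnorm (Csub (gap_term z k) (gap_term w k))
    <= absa k * (INR (n k) * Q ^ (n k - 1)) * Cnorm (Csub z w).
Proof.
  intros Hz Hw. unfold gap_term.
  replace (Csub (Cmul (a k) (Cpow z (n k))) (Cmul (a k) (Cpow w (n k))))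
    with (Cmul (a k) (Csub (Cpow z (n k)) (Cpow w (n k)))).
  2: { generalize (Cpow z (n k)) (Cpow w (n k)). intros [] []. destruct (a k).
       unfold Csub, Cmul, Cadd, Copp. ceq. }
  rewrite cn_mul, Rmult_assoc. apply Rmult_le_compat_l; [apply cn_pos |].
  apply cpow_lipschitz; auto.
Qed.

Lemma gap_dterm_diff (z w : Cx) (Q : R) k : Cnorm z <= Q -> Cnorm w <= Q ->
  Cnorm (Csub (gap_dterm z k) (gap_dterm w k))
    <= absa k * (INR (n k) * INR (n k) * Q ^ (n k - 2)) * Cnorm (Csub z w).
Proof.
  intros Hz Hw. unfold gap_dterm.
  replace (Csub (Cmul (a k) (Cmul (INR (n k), 0) (Cpow z (n k - 1))))
                (Cmul (a k) (Cmul (INR (n k), 0) (Cpow w (n k - 1)))))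
    with (Cmul (a k) (Cmul (INR (n k), 0) (Csub (Cpow z (n k - 1)) (Cpow w (n k - 1))))).
  2: { generalize (Cpow z (n k - 1)) (Cpow w (n k - 1)). intros [] []. destruct (a k).
       unfold Csub, Cmul, Cadd, Copp. ceq. }
  rewrite !cn_mul, cn_real, Rabs_right by (apply Rle_ge, pos_INR).
  assert (Hd : Cnorm (Csub (Cpow z (n k - 1)) (Cpow w (n k - 1)))
               <= INR (n k) * Q ^ (n k - 2) * Cnorm (Csub z w)).
  { eapply Rle_trans; [apply (cpow_lipschitz z w Q (n k - 1)); auto |].
    replace (n k - 1 - 1)%nat with (n k - 2)%nat by lia.
    apply Rmult_le_compat_r; [apply cn_pos |]. apply Rmult_le_compat_r; [apply pow_le; pose proof (cn_pos z); lra |].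
    apply le_INR. lia. }
  replace (absa k * (INR (n k) * INR (n k) * Q ^ (n k - 2)) * Cnorm (Csub z w))
    with (absa k * (INR (n k) * (INR (n k) * Q ^ (n k - 2) * Cnorm (Csub z w)))) by ring.
  apply Rmult_le_compat_l; [apply cn_pos |]. apply Rmult_le_compat_l; [apply pos_INR | exact Hd].
Qed.

Lemma f_bounded : exists M, 0 <= M /\ forall z, inD z -> Cnorm (f z) <= M.
Proof.
  destruct (absa_summable) as [M [HM [HS _]]].
  exists M. split; [exact HM |]. intros z Hz.
  apply (limit_norm_le (gap_term z) (f z) M (gap_series_cv z Hz)). intros N.
  eapply Rle_trans; [| apply (HS N)]. apply sum_growing. intros k.
  rewrite cn_gap_term. pose proof (absa_nonneg k).
  assert (Cnorm z ^ n k <= 1) by (apply pow_le_one; split; [apply cn_pos | unfold inD in Hz; lra]).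
  nra.
Qed.

Lemma f_lipschitz (Q : R) : 0 < Q < 1 ->
  exists L, 0 <= L /\ forall z w, Cnorm z <= Q -> Cnorm w <= Q ->
    Cnorm (Csub (f z) (f w)) <= L * Cnorm (Csub z w).
Proof.
  intros HQ.
  destruct (weighted_sum_bounded Q _ HQ
              (fun k => first_deriv_weight Q k HQ)) as [B [HB HBs]].
  exists B. split; [exact HB |]. intros z w Hz Hw.
  apply (limit_diff_le (gap_term z) (gap_term w));
    [apply gap_series_cv; unfold inD; lra .. |]. intros N.
  eapply Rle_trans; [apply (sum_growing _ (fun k => absa k * (INR (n k) * Q ^ (n k - 1)) * Cnorm (Csub z w)));
                     intros k; apply gap_term_diff; auto |].
  rewrite <- scal_sum, Rmult_comm. apply Rmult_le_compat_r; [apply cn_pos | apply HBs].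
Qed.

Lemma gap_dterm_sum_bounded (Q : R) : 0 < Q < 1 ->
  exists B, 0 <= B /\ forall z N, Cnorm z <= Q -> sum_f_R0 (fun k => Cnorm (gap_dterm z k)) N <= B.
Proof.
  intros HQ.
  destruct (weighted_sum_bounded Q _ HQ
              (fun k => first_deriv_weight Q k HQ)) as [B [HB HBs]].
  exists B. split; [exact HB |]. intros z N Hz. eapply Rle_trans; [| apply (HBs N)].
  apply sum_growing. intros k. rewrite cn_gap_dterm.
  apply Rmult_le_compat_l; [apply cn_pos |]. apply Rmult_le_compat_l; [apply pos_INR |].
  apply pow_incr. split; [apply cn_pos | exact Hz].
Qed.

Lemma fderiv_cv (z : Cx) : Cnorm z < 1 ->
  Un_cv (fun N => Cnorm (Csub (csum (gap_dterm z) N) (fderiv z))) 0.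
Proof.
  intros Hz. pose proof (cn_pos z).
  destruct (gap_dterm_sum_bounded ((1 + Cnorm z) / 2) ltac:(lra)) as [B [HB HBs]].
  apply climit_cv, (bounded_series_cv _ B); [intros; apply cn_pos |].
  intros N. apply HBs. lra.
Qed.

Lemma fderiv_bounded (Q : R) : 0 < Q < 1 ->
  exists L, 0 <= L /\ forall z, Cnorm z <= Q -> Cnorm (fderiv z) <= L.
Proof.
  intros HQ. destruct (gap_dterm_sum_bounded Q HQ) as [B [HB HBs]].
  exists B. split; [exact HB |]. intros z Hz.
  apply (limit_norm_le (gap_dterm z)); [apply fderiv_cv; lra |]. intros N. apply HBs, Hz.
Qed.

Lemma fderiv_lipschitz (Q : R) : 0 < Q < 1 ->
  exists L, 0 <= L /\ forall z w, Cnorm z <= Q -> Cnorm w <= Q ->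
    Cnorm (Csub (fderiv z) (fderiv w)) <= L * Cnorm (Csub z w).
Proof.
  intros HQ.
  destruct (weighted_sum_bounded Q _ HQ
              (fun k => second_deriv_weight Q k HQ)) as [B [HB HBs]].
  exists B. split; [exact HB |]. intros z w Hz Hw.
  apply (limit_diff_le (gap_dterm z) (gap_dterm w)); [apply fderiv_cv; lra .. |]. intros N.
  eapply Rle_trans;
    [apply (sum_growing _ (fun k => absa k * (INR (n k) * INR (n k) * Q ^ (n k - 2)) * Cnorm (Csub z w)));
     intros k; apply gap_dterm_diff; auto |].
  rewrite <- scal_sum, Rmult_comm. apply Rmult_le_compat_r; [apply cn_pos | apply HBs].
Qed.

(* Taylor estimate |f(z+h) - f(z) - f'(z) h| <= B |h|^2, obtained from the
   termwise remainders a_k ((z+h)^(n_k) - z^(n_k) - n_k z^(n_k - 1) h). *)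
Lemma f_taylor_bound (Q : R) : 0 < Q < 1 ->
  exists B, 0 <= B /\ forall z h, Cnorm z <= Q -> Cnorm (Cadd z h) <= Q ->
    Cnorm (Csub (Csub (f (Cadd z h)) (f z)) (Cmul (fderiv z) h)) <= B * Cnorm h ^ 2.
Proof.
  intros HQ.
  destruct (weighted_sum_bounded Q _ HQ
              (fun k => second_deriv_weight Q k HQ)) as [B [HB HBs]].
  exists B. split; [exact HB |]. intros z h Hz Hzh.
  set (rem := fun k => Cmul (a k) (cpow_taylor_rem z h (n k))).
  assert (Hrem : forall N, csum rem N
            = Csub (Csub (csum (gap_term (Cadd z h)) N) (csum (gap_term z) N))
                   (Cmul (csum (gap_dterm z) N) h)).
  { intros N. rewrite !csum_sub, csum_mul, csum_sub. f_equal. apply functional_extensionality.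
    intros k. unfold rem, gap_term, gap_dterm, cpow_taylor_rem.
    generalize (Cpow (Cadd z h) (n k)) (Cpow z (n k)) (Cpow z (n k - 1)). intros [] [] [].
    destruct (a k), h. unfold Csub, Cadd, Copp, Cmul. ceq. }
  assert (Hlim : Un_cv (fun N => Cnorm (Csub (csum rem N)
                   (Csub (Csub (f (Cadd z h)) (f z)) (Cmul (fderiv z) h)))) 0).
  { apply (null_squeeze (fun N => Cnorm (Csub (csum (gap_term (Cadd z h)) N) (f (Cadd z h)))
                          + Cnorm (Csub (csum (gap_term z) N) (f z))
                          + Cnorm h * Cnorm (Csub (csum (gap_dterm z) N) (fderiv z)))).
    - apply null_plus; [apply null_plus |].
      + apply gap_series_cv. unfold inD. lra.
      + apply gap_series_cv. unfold inD. lra.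
      + apply null_scal, fderiv_cv. lra.
    - intros N. split; [apply cn_pos |]. rewrite Hrem.
      assert (Hsplit : forall Ph P0 DN Fh F0 D0 : Cx,
                Csub (Csub (Csub Ph P0) (Cmul DN h)) (Csub (Csub Fh F0) (Cmul D0 h))
                = Csub (Csub (Csub Ph Fh) (Csub P0 F0)) (Cmul h (Csub DN D0))).
      { intros [] [] [] [] [] []. destruct h. unfold Csub, Cadd, Copp, Cmul. ceq. }
      rewrite Hsplit.
      eapply Rle_trans; [apply cn_sub |]. rewrite cn_mul.
      pose proof (cn_sub (Csub (csum (gap_term (Cadd z h)) N) (f (Cadd z h)))
                         (Csub (csum (gap_term z) N) (f z))). lra. }
  apply (limit_norm_le rem _ _ Hlim). intros N.
  eapply Rle_trans;
    [apply (sum_growing _ (fun k => absa k * (INR (n k) * INR (n k) * Q ^ (n k - 2)) * Cnorm h ^ 2)) |].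
  - intros k. unfold rem. rewrite cn_mul, Rmult_assoc. apply Rmult_le_compat_l; [apply cn_pos |].
    eapply Rle_trans; [apply (cpow_taylor_rem_bound z h Q (n k)); auto; lra | right; ring].
  - rewrite <- scal_sum, Rmult_comm. apply Rmult_le_compat_r; [apply pow2_ge_0 | apply HBs].
Qed.

Lemma f_has_deriv (z : Cx) : inD z -> has_cderiv f z (fderiv z).
Proof.
  intros Hz eps Heps. unfold inD in Hz. pose proof (cn_pos z).
  set (Q := (1 + Cnorm z) / 2).
  destruct (f_taylor_bound Q ltac:(unfold Q; lra)) as [B [HB HBs]].
  exists (Rmin ((1 - Cnorm z) / 2) (eps / (B + 1))). split.
  { apply Rmin_pos; [lra | apply Rdiv_lt_0_compat; lra]. }
  intros h Hh.
  assert (Hh1 : Cnorm h < (1 - Cnorm z) / 2) by (eapply Rlt_le_trans; [exact Hh | apply Rmin_l]).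
  assert (Hh2 : Cnorm h < eps / (B + 1)) by (eapply Rlt_le_trans; [exact Hh | apply Rmin_r]).
  pose proof (cn_pos h). pose proof (cn_add z h).
  eapply Rle_trans; [apply HBs; unfold Q; lra |].
  assert (B * Cnorm h <= eps).
  { apply Rle_trans with ((B + 1) * (eps / (B + 1))); [apply Rmult_le_compat; lra | right; field; lra]. }
  replace (B * Cnorm h ^ 2) with ((B * Cnorm h) * Cnorm h) by ring.
  apply Rmult_le_compat_r; auto.
Qed.

(** * The Carleson measure estimate for |f'|^2 *)

(* Partial sums of sum_k |a_k|^2 K_{n_k}(r), which dominate |f'(z)|^2 (1 - |z|). *)
Definition kernel_psum (N : nat) (r : R) : R :=
  sum_f_R0 (fun k => absa k ^ 2 * box_kernel (n k) r) N.

Lemma kernel_psum_nonneg N r : 0 <= r -> 0 <= kernel_psum N r.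
Proof.
  intros. apply cond_pos_sum. intros k.
  apply Rmult_le_pos; [apply pow2_ge_0 | apply box_kernel_nonneg; auto].
Qed.

(* Cauchy-Schwarz against the lacunary estimate:
   (sum |a_k| n_k s^n_k)^2 <= (sum |a_k|^2 n_k s^n_k) * C_lambda / (1 - s). *)
Lemma lacunary_cauchy_schwarz (N : nat) (s : R) : 0 < s < 1 ->
  sum_f_R0 (fun k => absa k * (INR (n k) * s ^ n k)) N ^ 2
    <= sum_f_R0 (fun k => absa k ^ 2 * (INR (n k) * s ^ n k)) N * (lac_const / (1 - s)).
Proof.
  intros Hs. set (w := fun k => INR (n k) * s ^ n k).
  assert (Hw : forall k, 0 <= w k) by (intros k; apply Rmult_le_pos; [apply pos_INR | apply pow_le; lra]).
  assert (HY : 0 < lac_const / (1 - s)) by (apply Rdiv_lt_0_compat; [apply lac_const_pos | lra]).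
  change (sum_f_R0 (fun k => absa k * w k) N ^ 2
          <= sum_f_R0 (fun k => absa k ^ 2 * w k) N * (lac_const / (1 - s))).
  apply sq_le_of_amgm_bounds; [| | exact HY |].
  - apply cond_pos_sum. intros k. apply Rmult_le_pos; [apply absa_nonneg | apply Hw].
  - apply cond_pos_sum. intros k. apply Rmult_le_pos; [apply pow2_ge_0 | apply Hw].
  - intros t Ht.
    eapply Rle_trans;
      [apply (sum_growing _ (fun k => (absa k ^ 2 * w k) * (t / 2) + w k * (/ t / 2))) |].
    + intros k. pose proof (amgm (absa k) t Ht). pose proof (Hw k).
      apply Rle_trans with (((absa k ^ 2 * t + / t) / 2) * w k);
        [apply Rmult_le_compat_r; auto | right; field; lra].
    + rewrite plus_sum, <- !scal_sum.
      pose proof (lacunary_sum s N Hs) as Hlac. fold w in Hlac.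
      assert (/ t / 2 * sum_f_R0 w N <= / t / 2 * (lac_const / (1 - s)))
        by (apply Rmult_le_compat_l; [apply Rlt_le, Rdiv_lt_0_compat; [apply Rinv_0_lt_compat |]; lra | exact Hlac]).
      replace ((t * sum_f_R0 (fun k => absa k ^ 2 * w k) N + lac_const / (1 - s) / t) / 2)
        with (t / 2 * sum_f_R0 (fun k => absa k ^ 2 * w k) N + / t / 2 * (lac_const / (1 - s)))
        by (field; lra).
      lra.
Qed.

Lemma fderiv_sq_bound (z : Cx) (B : R) :
  Cnorm z < 1 -> 0 <= B -> (forall N, kernel_psum N (Cnorm z) <= B) ->
  Cnorm (fderiv z) ^ 2 <= 4 * (B * (2 * lac_const / (1 - Cnorm z))).
Proof.
  intros Hz HB HXp. pose proof (cn_pos z).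
  set (s := (1 + Cnorm z) / 2). assert (Hs : 0 < s < 1) by (unfold s; lra).
  set (Y := 2 * lac_const / (1 - Cnorm z)).
  assert (HY : lac_const / (1 - s) = Y) by (unfold Y, s; field; lra).
  assert (HYpos : 0 < Y) by (unfold Y; pose proof lac_const_pos; apply Rdiv_lt_0_compat; lra).
  assert (Hpsum : forall N, sum_f_R0 (fun k => Cnorm (gap_dterm z k)) N <= 2 * sqrt (B * Y)).
  { intros N. set (S := sum_f_R0 (fun k => absa k * (INR (n k) * s ^ n k)) N).
    assert (HS0 : 0 <= S).
    { apply cond_pos_sum. intros k. apply Rmult_le_pos; [apply absa_nonneg |].
      apply Rmult_le_pos; [apply pos_INR | apply pow_le; lra]. }
    assert (HSq : S <= sqrt (B * Y)).
    { rewrite <- (sqrt_pow2 S) by exact HS0. apply sqrt_le_1_alt.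
      eapply Rle_trans; [apply (lacunary_cauchy_schwarz N s Hs) |]. rewrite HY.
      apply Rmult_le_compat_r; [lra | apply HXp]. }
    apply Rle_trans with (2 * S); [| lra].
    unfold S. rewrite scal_sum. apply sum_growing. intros k. rewrite cn_gap_dterm.
    pose proof (pow_pred_le_kernel_base (Cnorm z) (n k) ltac:(lra) (Hn_pos k)). fold s in H0.
    pose proof (absa_nonneg k). pose proof (pos_INR (n k)).
    replace (absa k * (INR (n k) * s ^ n k) * 2) with (absa k * (INR (n k) * (2 * s ^ n k))) by ring.
    apply Rmult_le_compat_l; auto. apply Rmult_le_compat_l; auto. }
  assert (HD : Cnorm (fderiv z) <= 2 * sqrt (B * Y))
    by (apply (limit_norm_le (gap_dterm z)); [apply fderiv_cv; lra | exact Hpsum]).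
  assert (Cnorm (fderiv z) ^ 2 <= (2 * sqrt (B * Y)) ^ 2) by (apply pow_incr; split; [apply cn_pos | auto]).
  rewrite Rpow_mult_distr, pow2_sqrt in H0 by (apply Rmult_le_pos; lra). lra.
Qed.

Lemma kernel_series_cv (rho : R) : 0 <= rho < 1 ->
  exists Xs, infinite_sum (fun k => absa k ^ 2 * box_kernel (n k) rho) Xs.
Proof.
  intros Hr. set (Q := (1 + rho) / 2). assert (HQ : 0 < Q < 1) by (unfold Q; lra).
  destruct absa_summable as [M [HM [_ HAk]]].
  assert (Hw : forall k, 0 <= box_kernel (n k) rho <= INR (n k) ^ 3 * Q ^ (n k - 2)).
  { intros k. split; [apply box_kernel_nonneg; lra |]. unfold box_kernel. fold Q.
    pose proof (gap_ge1 k).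
    apply Rmult_le_compat; [apply pos_INR | apply pow_le; lra | simpl; nra | apply pow_decr; [lra | lia]]. }
  destruct (weighted_sum_bounded Q _ HQ Hw) as [B [HB HBs]].
  apply (bounded_series_cv _ (M * B)).
  - intros k. apply Rmult_le_pos; [apply pow2_ge_0 | apply box_kernel_nonneg; lra].
  - intros N. eapply Rle_trans; [apply (sum_growing _ (fun k => (absa k * box_kernel (n k) rho) * M)) |].
    + intros k. pose proof (absa_nonneg k). specialize (HAk k). specialize (Hw k).
      replace (absa k ^ 2 * box_kernel (n k) rho) with ((absa k * box_kernel (n k) rho) * absa k) by ring.
      apply Rmult_le_compat_l; auto. apply Rmult_le_pos; lra.
    + rewrite <- scal_sum. apply Rmult_le_compat_l; auto.
Qed.

(* The kernel is increasing in r, so the tail of the sum at r <= rho is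
   dominated by the tail at rho. *)
Lemma kernel_tail_bound (r rho Xs : R) (N0 : nat) : 0 <= r <= rho ->
  infinite_sum (fun k => absa k ^ 2 * box_kernel (n k) rho) Xs ->
  forall N, kernel_psum N r <= kernel_psum N0 r + (Xs - kernel_psum N0 rho).
Proof.
  intros Hr HXs N.
  assert (Hnn : forall k, 0 <= absa k ^ 2 * box_kernel (n k) rho)
    by (intros k; apply Rmult_le_pos; [apply pow2_ge_0 | apply box_kernel_nonneg; lra]).
  assert (Hinc : forall k, absa k ^ 2 * box_kernel (n k) r <= absa k ^ 2 * box_kernel (n k) rho).
  { intros k. apply Rmult_le_compat_l; [apply pow2_ge_0 |]. unfold box_kernel.
    apply Rmult_le_compat_l; [apply pos_INR | apply pow_incr; lra]. }
  destruct (Nat.le_gt_cases N N0) as [Hle | Hlt].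
  - assert (kernel_psum N r <= kernel_psum N0 r).
    { apply psum_mono; auto. intros k. apply Rmult_le_pos; [apply pow2_ge_0 | apply box_kernel_nonneg; lra]. }
    pose proof (sum_incr _ N0 Xs HXs Hnn). unfold kernel_psum in *. lra.
  - assert (Hind : forall m, kernel_psum (N0 + m) r - kernel_psum N0 r
                             <= kernel_psum (N0 + m) rho - kernel_psum N0 rho).
    { induction m.
      - rewrite Nat.add_0_r. lra.
      - replace (N0 + S m)%nat with (S (N0 + m)) by lia. unfold kernel_psum in *.
        rewrite !tech5. pose proof (Hinc (S (N0 + m))). lra. }
    replace N with (N0 + (N - N0))%nat by lia.
    pose proof (Hind (N - N0)%nat). pose proof (sum_incr _ (N0 + (N - N0)) Xs HXs Hnn).
    unfold kernel_psum in *. lra.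
Qed.

Definition box_integrand (t r : R) : R :=
  / PI * ((1 - r ^ 2) * Cnorm (fderiv (polar r t)) ^ 2 * r).

Lemma box_integrand_lipschitz (rho : R) : 0 <= rho < 1 ->
  exists K, 0 <= K /\ forall a0 b0 c, 0 <= c -> lipschitz_on_rect box_integrand a0 b0 c rho K.
Proof.
  intros Hrho. set (Q := (1 + rho) / 2). assert (HQ : 0 < Q < 1) by (unfold Q; lra).
  destruct (fderiv_bounded Q HQ) as [L1 [HL1 HD1]].
  destruct (fderiv_lipschitz Q HQ) as [L2 [HL2 HD2]].
  pose proof PI_RGT_0 as HPI. pose proof (pow2_ge_0 L1).
  assert (HiPI : 0 < / PI) by (apply Rinv_0_lt_compat; lra).
  exists (/ PI * (4 * L1 * L2 + 2 * L1 ^ 2)). split; [apply Rmult_le_pos; nra |].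
  intros a0 b0 c Hc t t' r r' _ _ Hr Hr'.
  set (z := polar r t). set (w := polar r' t').
  assert (Hz : Cnorm z <= Q) by (unfold z; rewrite cn_polar, Rabs_right; unfold Q; lra).
  assert (Hw : Cnorm w <= Q) by (unfold w; rewrite cn_polar, Rabs_right; unfold Q; lra).
  assert (Hd : Cnorm (Csub z w) <= Rabs (r - r') + 2 * Rabs (t - t')).
  { unfold z, w. eapply Rle_trans; [apply polar_lipschitz |]. rewrite (Rabs_right r') by lra.
    pose proof (Rabs_pos (t - t')). nra. }
  destruct (radial_weight_bounds r r' ltac:(lra) ltac:(lra)) as [Hp1 Hp2].
  assert (Huv : Rabs (Cnorm (fderiv z) - Cnorm (fderiv w)) <= L2 * Cnorm (Csub z w))
    by (eapply Rle_trans; [apply cn_reverse_tri | apply HD2; auto]).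
  pose proof (weighted_sq_lipschitz ((1 - r ^ 2) * r) ((1 - r' ^ 2) * r')
                (Cnorm (fderiv z)) (Cnorm (fderiv w)) L1 L2 (Cnorm (Csub z w)) (Rabs (r - r')) Hp1 Hp2
               (conj (cn_pos _) (HD1 z Hz)) (conj (cn_pos _) (HD1 w Hw)) Huv HL2 (cn_pos _)) as HP.
  unfold box_integrand. fold z w.
  replace (/ PI * ((1 - r ^ 2) * Cnorm (fderiv z) ^ 2 * r) - / PI * ((1 - r' ^ 2) * Cnorm (fderiv w) ^ 2 * r'))
    with (/ PI * ((1 - r ^ 2) * r * Cnorm (fderiv z) ^ 2 - (1 - r' ^ 2) * r' * Cnorm (fderiv w) ^ 2)) by ring.
  rewrite Rabs_mult, (Rabs_right (/ PI)), (Rmult_assoc (/ PI) (4 * L1 * L2 + 2 * L1 ^ 2)) by lra. apply Rmult_le_compat_l; [lra |].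
  eapply Rle_trans; [exact HP |].
  pose proof (Rabs_pos (t - t')). pose proof (Rabs_pos (r - r')).
  assert (2 * L1 * L2 * Cnorm (Csub z w) <= 2 * L1 * L2 * (Rabs (r - r') + 2 * Rabs (t - t')))
    by (apply Rmult_le_compat_l; [apply Rmult_le_pos |]; lra).
  assert (0 <= L1 * L2) by nra.
  nra.
Qed.

Lemma box_integrand_le (t r rho Xs : R) (N0 : nat) : 0 <= r <= rho -> rho < 1 ->
  infinite_sum (fun k => absa k ^ 2 * box_kernel (n k) rho) Xs ->
  box_integrand t r <= (16 * lac_const / PI) * (kernel_psum N0 r + (Xs - kernel_psum N0 rho)).
Proof.
  intros Hr Hrho HXs.
  set (B := kernel_psum N0 r + (Xs - kernel_psum N0 rho)).
  assert (HB : 0 <= B).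
  { pose proof (kernel_psum_nonneg N0 r ltac:(lra)).
    pose proof (sum_incr _ N0 Xs HXs
                  (fun k => Rmult_le_pos _ _ (pow2_ge_0 (absa k)) (box_kernel_nonneg (n k) rho ltac:(lra)))).
    unfold B, kernel_psum in *. lra. }
  assert (Hz : Cnorm (polar r t) = r) by (rewrite cn_polar; apply Rabs_right; lra).
  pose proof (fderiv_sq_bound (polar r t) B ltac:(lra) HB) as HD.
  rewrite Hz in HD. specialize (HD (kernel_tail_bound r rho Xs N0 Hr HXs)).
  pose proof PI_RGT_0 as HPI. pose proof lac_const_pos as HCl.
  unfold box_integrand.
  assert (H1 : (1 - r ^ 2) * Cnorm (fderiv (polar r t)) ^ 2 * r
               <= (1 - r ^ 2) * (4 * (B * (2 * lac_const / (1 - r)))) * r)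
    by (apply Rmult_le_compat_r; [lra |]; apply Rmult_le_compat_l; [nra | auto]).
  replace ((1 - r ^ 2) * (4 * (B * (2 * lac_const / (1 - r)))) * r)
    with (8 * lac_const * B * ((1 + r) * r)) in H1 by (field; lra).
  assert (8 * lac_const * B * ((1 + r) * r) <= 8 * lac_const * B * 2)
    by (apply Rmult_le_compat_l; [apply Rmult_le_pos |]; nra).
  replace (16 * lac_const / PI * B) with (/ PI * (8 * lac_const * B * 2)) by (field; lra).
  apply Rmult_le_compat_l; [apply Rlt_le, Rinv_0_lt_compat |]; lra.
Qed.

Lemma kernel_psum_is_RInt (N : nat) (c rho : R) :
  is_RInt (kernel_psum N) c rho
    (sum_f_R0 (fun k => absa k ^ 2 * RInt (box_kernel (n k)) c rho) N).
Proof.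
  assert (Hk : forall k, is_RInt (box_kernel (n k)) c rho (RInt (box_kernel (n k)) c rho)).
  { intros k. apply (RInt_correct (V := R_CompleteNormedModule)).
    eexists. apply box_kernel_is_RInt. }
  induction N.
  - apply (is_RInt_scal (V := R_NormedModule)). apply Hk.
  - apply (is_RInt_ext (V := R_NormedModule)
             (fun r => plus (kernel_psum N r) (scal (absa (S N) ^ 2) (box_kernel (n (S N)) r)))).
    + intros x _. reflexivity.
    + apply (is_RInt_plus (V := R_NormedModule)); [exact IHN |].
      apply (is_RInt_scal (V := R_NormedModule)). apply Hk.
Qed.

(* The logarithmic gain: over a box of side l, the kernel integrals weighted by
   |a_k|^2 and by log^2(2/l) are summable, thanks to sum |a_k|^2 log^3 n_k < oo. *)
Lemma kernel_integral_log_bound : exists C, 0 <= C /\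
  forall l rho N, 0 < l <= 2 * PI -> 1 - l / (2 * PI) <= rho <= 1 ->
    sum_f_R0 (fun k => absa k ^ 2 * RInt (box_kernel (n k)) (1 - l / (2 * PI)) rho) N
      * ln (2 / l) ^ 2 <= C.
Proof.
  destruct absa_summable as [M [HM [HS HAk]]]. destruct Hweight as [SW HSW].
  set (CL := 20 + 4 * ln PI ^ 2).
  assert (HCL : 0 < CL) by (unfold CL; pose proof (pow2_ge_0 (ln PI)); lra).
  exists (CL * (M * M + SW)). split.
  { apply Rmult_le_pos; [lra |]. pose proof (sum_incr _ 0 SW HSW log_weight_nonneg).
    pose proof (log_weight_nonneg 0). simpl in *. nra. }
  intros l rho N Hl Hrho. pose proof PI_RGT_0.
  set (c := 1 - l / (2 * PI)) in *.
  assert (Hh : 0 < l / (2 * PI) <= 1).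
  { split; [apply Rdiv_lt_0_compat; lra |]. apply (Rmult_le_reg_r (2 * PI)); [lra |].
    replace (l / (2 * PI) * (2 * PI)) with l by (field; lra). lra. }
  assert (Hc : 0 <= c <= rho) by (unfold c in *; lra).
  rewrite Rmult_comm, scal_sum.
  eapply Rle_trans; [apply (sum_growing _ (fun k => absa k ^ 2 * CL + log_weight k * CL)) |].
  - intros k. pose proof (gap_ge1 k).
    destruct (box_kernel_integral_bounds (n k) c rho Hc (proj2 Hrho)) as [I0 [I1 I2]].
    assert (HI : INR (n k) * (rho - c) <= INR (n k) * (l / (2 * PI)))
      by (apply Rmult_le_compat_l; [apply pos_INR | unfold c; lra]).
    pose proof (kernel_log_weight_arc _ l (INR (n k)) Hl H0 I0 ltac:(lra) I2) as HLk.
    unfold log_weight. fold (absa k). fold CL in HLk.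
    replace (absa k ^ 2 * RInt (box_kernel (n k)) c rho * ln (2 / l) ^ 2)
      with (absa k ^ 2 * (RInt (box_kernel (n k)) c rho * ln (2 / l) ^ 2)) by ring.
    apply Rle_trans with (absa k ^ 2 * (CL * (1 + ln (INR (n k)) ^ 3)));
      [apply Rmult_le_compat_l; [apply pow2_ge_0 | exact HLk] | right; ring].
  - rewrite plus_sum, <- !scal_sum.
    assert (sum_f_R0 (fun k => absa k ^ 2) N <= M * M).
    { eapply Rle_trans; [apply (sum_growing _ (fun k => absa k * M)) |].
      - intros k. pose proof (absa_nonneg k). specialize (HAk k). simpl. rewrite Rmult_1_r.
        apply Rmult_le_compat_l; auto.
      - rewrite <- scal_sum, Rmult_comm. apply Rmult_le_compat_r; [exact HM | apply HS]. }
    pose proof (sum_incr _ N SW HSW log_weight_nonneg). nra.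
Qed.

(* Bound on the inner (radial) integrals over a Carleson box, weighted by log^2(2/l):
   integrate the majorant of [box_integrand_le], then let the truncation N0 -> oo. *)
Lemma inner_integral_log_bound : exists K0, 0 <= K0 /\
  forall t0 l rho t, 0 < l <= 2 * PI -> 1 - l / (2 * PI) <= rho < 1 -> t0 <= t <= t0 + l ->
    inner_integral box_integrand t0 (t0 + l) (1 - l / (2 * PI)) rho t * ln (2 / l) ^ 2 <= K0.
Proof.
  destruct kernel_integral_log_bound as [C [HC HCb]].
  pose proof PI_RGT_0 as HPI. pose proof lac_const_pos.
  set (K3 := 16 * lac_const / PI). assert (HK3 : 0 < K3) by (unfold K3; apply Rdiv_lt_0_compat; lra).
  exists (K3 * C). split; [apply Rmult_le_pos; lra |].
  intros t0 l rho t Hl Hrho Ht.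
  set (c := 1 - l / (2 * PI)) in *. set (LN := ln (2 / l) ^ 2).
  assert (Hc : 0 <= c).
  { unfold c. assert (l / (2 * PI) <= 1); [| lra]. apply (Rmult_le_reg_r (2 * PI)); [lra |].
    replace (l / (2 * PI) * (2 * PI)) with l by (field; lra). lra. }
  assert (HLN : 0 <= LN) by apply pow2_ge_0.
  destruct (kernel_series_cv rho ltac:(lra)) as [Xs HXs].
  destruct (box_integrand_lipschitz rho ltac:(lra)) as [Kl [HKl HgL]].
  apply (le_of_null_excess (fun N0 => (K3 * (rho - c) * LN) * (Xs - kernel_psum N0 rho))).
  { apply null_scal. intros eps Heps. destruct (HXs eps Heps) as [N HN]. exists N. intros m Hm.
    specialize (HN m Hm). unfold R_dist in *. rewrite Rminus_0_r, Rabs_minus_sym. exact HN. }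
  intros N0.
  set (T0 := Xs - kernel_psum N0 rho).
  set (Sg := sum_f_R0 (fun k => absa k ^ 2 * RInt (box_kernel (n k)) c rho) N0).
  assert (HI : is_RInt (fun r => K3 * (kernel_psum N0 r + T0)) c rho (K3 * (Sg + (rho - c) * T0))).
  { apply (is_RInt_ext (V := R_NormedModule) (fun r => scal K3 (plus (kernel_psum N0 r) T0)));
      [intros; reflexivity |].
    apply (is_RInt_scal (V := R_NormedModule)), (is_RInt_plus (V := R_NormedModule));
      [apply kernel_psum_is_RInt | apply (is_RInt_const (V := R_NormedModule))]. }
  assert (HFt : inner_integral box_integrand t0 (t0 + l) c rho t <= K3 * (Sg + (rho - c) * T0)).
  { apply (inner_integral_le _ (fun r => K3 * (kernel_psum N0 r + T0)) t0 (t0 + l) c rho Kl _ t);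
      try lra; auto.
    intros r Hr. apply box_integrand_le; auto; lra. }
  assert (HSg : Sg * LN <= C).
  { assert (Hrho' : 1 - l / (2 * PI) <= rho <= 1) by (unfold c in Hrho; lra).
    exact (HCb l rho N0 Hl Hrho'). }
  assert (inner_integral box_integrand t0 (t0 + l) c rho t * LN <= K3 * (Sg + (rho - c) * T0) * LN)
    by (apply Rmult_le_compat_r; auto).
  assert (K3 * (Sg * LN) <= K3 * C) by (apply Rmult_le_compat_l; lra).
  replace (K3 * (Sg + (rho - c) * T0) * LN) with (K3 * (Sg * LN) + K3 * (rho - c) * LN * T0) in H0 by ring.
  lra.
Qed.

Lemma fderiv_carleson :
  exists K, 0 < K /\ forall t0 l, 0 < l <= 2 * PI -> carleson_box_bound fderiv K t0 l.
Proof.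
  destruct inner_integral_log_bound as [K0 [HK0 Hin]].
  exists (K0 + 1). split; [lra |].
  intros t0 l Hl rho Hrho. pose proof PI_RGT_0.
  set (c := 1 - l / (2 * PI)) in *.
  assert (Hc : 0 <= c).
  { unfold c. assert (l / (2 * PI) <= 1); [| lra]. apply (Rmult_le_reg_r (2 * PI)); [lra |].
    replace (l / (2 * PI) * (2 * PI)) with l by (field; lra). lra. }
  destruct (box_integrand_lipschitz rho ltac:(lra)) as [Kl [HKl HgL]].
  specialize (HgL t0 (t0 + l) c Hc).
  exists (RInt (inner_integral box_integrand t0 (t0 + l) c rho) t0 (t0 + l)). split.
  { apply (int2_RInt box_integrand t0 (t0 + l) c rho Kl); auto; lra. }
  set (LN := ln (2 / l) ^ 2). destruct (Req_dec LN 0) as [H0 | H0].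
  - rewrite H0, Rmult_0_r. nra.
  - assert (HLN : 0 < LN) by (pose proof (pow2_ge_0 (ln (2 / l))); fold LN in H1; lra).
    assert (HB : RInt (inner_integral box_integrand t0 (t0 + l) c rho) t0 (t0 + l)
                 <= (t0 + l - t0) * (K0 / LN)).
    { apply (RInt_inner_integral_le box_integrand t0 (t0 + l) c rho Kl); auto; try lra.
      intros t Ht. apply (Rmult_le_reg_r LN); [exact HLN |].
      replace (K0 / LN * LN) with K0 by (field; lra). apply Hin; auto; lra. }
    replace (t0 + l - t0) with l in HB by ring.
    apply (Rmult_le_compat_r LN) in HB; [| lra].
    replace (l * (K0 / LN) * LN) with (l * K0) in HB by (field; lra). nra.
Qed.

(* f is in H^1: it is bounded, and t |-> |f(r e^{it})| is Lipschitz, so its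
   integral exists as a limit of midpoint sums. *)
Lemma f_in_H1 : H1 f.
Proof.
  split; [intros z Hz; exists (fderiv z); apply f_has_deriv, Hz |].
  destruct f_bounded as [M [HM Hf]]. exists M. intros r Hr.
  set (Q := (1 + r) / 2). assert (HQ : 0 < Q < 1) by (unfold Q; lra).
  destruct (f_lipschitz Q HQ) as [Lf [HLf HfL]].
  pose proof PI_RGT_0 as HPI.
  set (G := fun t => Cnorm (f (polar r t))).
  assert (HGL : lipschitz G (Lf * (2 * r))).
  { intros u v. unfold G. eapply Rle_trans; [apply cn_reverse_tri |].
    eapply Rle_trans; [apply HfL; rewrite cn_polar, Rabs_right; unfold Q; lra |].
    eapply Rle_trans; [apply Rmult_le_compat_l; [exact HLf | apply polar_lipschitz] |].
    rewrite Rminus_diag, Rabs_R0, (Rabs_right r) by lra. right. ring. }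
  exists (RInt G 0 (2 * PI)). split.
  - apply (int1_RInt G (Lf * (2 * r))); [lra | apply Rmult_le_pos; lra | exact HGL].
  - assert (HI : is_RInt (fun _ => M) 0 (2 * PI) (scal (2 * PI - 0) M))
      by apply (is_RInt_const (V := R_NormedModule)).
    assert (RInt G 0 (2 * PI) <= (2 * PI - 0) * M).
    { change ((2 * PI - 0) * M) with (scal (2 * PI - 0) M). rewrite <- (is_RInt_unique _ _ _ _ HI).
      apply RInt_le; [lra | apply (lipschitz_ex_RInt _ _ _ _ HGL) | eexists; exact HI |].
      intros x _. apply Hf. unfold inD. rewrite cn_polar, Rabs_right; lra. }
    apply (Rmult_le_reg_r (2 * PI)); [lra |].
    unfold Rdiv. rewrite Rmult_assoc, Rinv_l, Rmult_1_r by lra. lra.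
Qed.

Theorem lacunary_BMOA_log_Hinf : BMOA_log f /\ Hinf f.
Proof.
  split.
  - split; [exact f_in_H1 |].
    exists fderiv. split; [intros z Hz; apply f_has_deriv, Hz | exact fderiv_carleson].
  - split; [intros z Hz; exists (fderiv z); apply f_has_deriv, Hz |].
    destruct f_bounded as [M [_ HM]]. exists M. exact HM.
Qed.

End Coefficients.
End Lacunary.


Theorem mainTheorem11 (a : nat -> Cx) (n : nat -> nat) (lambda : R) (f : Cx -> Cx)
  (Hn_pos : forall k, (0 < n k)%nat)
  (Hlam : 1 < lambda)
  (Hgap : forall k, INR (n (S k)) >= lambda * INR (n k))
  (Hf_series : forall z, inD z ->
      Un_cv (fun N => Cnorm (Csub (lac_psum a n z N) (f z))) 0)
  (Hf_anal : forall z, inD z -> exists w, has_cderiv f z w)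
  (Hsum : exists S, infinite_sum
      (fun k => (Cnorm (a k)) ^ 2 * (ln (INR (n k))) ^ 3) S) :
  BMOA_log f /\ Hinf f.
Proof.
  exact (lacunary_BMOA_log_Hinf n lambda Hn_pos Hlam Hgap a Hsum f Hf_series).
Qed.
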